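(* For $|q|<1$ and generic $k$ ($k\neq1$, no vanishing denominators): \begin{gather*} \sum_{n\ge0}\frac{(1-kq^{2n})(k;q)_n}{(1-k)(q;q)_n}(-1)^nk^nq^{n(3n-1)/2}=(kq;q)_\infty,\\ \sum_{n\ge0}\frac{(1-kq^{4n})(-q,k;q^2)_n}{(1-k)(-kq,q^2;q^2)_n}(-1)^nk^nq^{2n^2-n}=\frac{(kq^2;q^2)_\infty}{(-kq;q^2)_\infty},\\ \sum_{n\ge0}\frac{(1-kq^{2n})(-1,k;q)_n}{(1-k)(-kq,q;q)_n}(-1)^nk^nq^{n^2}=\frac{(kq;q)_\infty}{(-kq;q)_\infty},\\ \sum_{n\ge0}\frac{(1-kq^{2n})(k^2;q^2)_n}{(1-k)(q^2;q^2)_n}(-1)^nq^{n^2}=(kq;q)_\infty(q;q^2)_\infty,\\ \sum_{n\ge0}\frac{(1-kq^{4n})(-q;q^2)_n(k^2;q^4)_n}{(1-k)(-kq;q^2)_n(q^4;q^4)_n}(-1)^nq^{n^2}=\frac{(kq^2;q^2)_\infty(q;q)_\infty}{(-kq;q^2)_\infty(q^4;q^4)_\infty},\\ \sum_{n\ge0}\frac{(1-kq^{4n})(k;q)_{2n}}{(1-k)(q;q)_{2n}}q^{2n^2-n}=\frac{(kq^2;q^2)_\infty}{(q;q^2)_\infty},\\ \sum_{n\ge0}\frac{(1-kq^{4n})(-q;q^2)_n(k;q)_{2n}}{(1-k)(-kq;q^2)_n(q;q)_{2n}}q^{n^2-n}=\frac{(kq^2,-1;q^2)_\infty}{(-kq,q;q^2)_\infty}.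 \end{gather*}
   Context: Notation: $(x;q)_n=\prod_{i=0}^{n-1}(1-xq^i)$, $(x;q)_\infty=\prod_{i\ge0}(1-xq^i)$, and $(x_1,\dots,x_j;q)_n=(x_1;q)_n\cdots(x_j;q)_n$ (also for $n=\infty$). *)

From Stdlib Require Import Reals.
Open Scope R_scope.

Definition Cplx : Type := (R * R)%type.
Definition RtoC (r : R) : Cplx := (r, 0).
Definition Czero : Cplx := (0, 0).
Definition Cone : Cplx := (1, 0).
Definition Cadd (z w : Cplx) : Cplx := (fst z + fst w, snd z + snd w).
Definition Copp (z : Cplx) : Cplx := (- fst z, - snd z).
Definition Csub (z w : Cplx) : Cplx := Cadd z (Copp w).
Definition Cmul (z w : Cplx) : Cplx :=
  (fst z * fst w - snd z * snd w, fst z * snd w + snd z * fst w).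
Definition Cinv (z : Cplx) : Cplx :=
  (fst z / (fst z ^ 2 + snd z ^ 2), - snd z / (fst z ^ 2 + snd z ^ 2)).
Definition Cdiv (z w : Cplx) : Cplx := Cmul z (Cinv w).
Definition Cnorm (z : Cplx) : R := sqrt (fst z ^ 2 + snd z ^ 2).
Fixpoint Cpow (z : Cplx) (n : nat) : Cplx :=
  match n with O => Cone | S m => Cmul z (Cpow z m) end.

Declare Scope C_scope.
Delimit Scope C_scope with C.
Infix "+" := Cadd : C_scope.
Infix "-" := Csub : C_scope.
Infix "*" := Cmul : C_scope.
Infix "/" := Cdiv : C_scope.
Notation "- z" := (Copp z) : C_scope.
Infix "^" := Cpow : C_scope.

Fixpoint qpoch (x q : Cplx) (n : nat) : Cplx :=
  match n with
  | O => Cone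
  | S m => Cmul (qpoch x q m) (Csub Cone (Cmul x (Cpow q m)))
  end.

(* Partial sums: Csum f N = f 0 + ... + f (N-1). *)
Fixpoint Csum (f : nat -> Cplx) (N : nat) : Cplx :=
  match N with O => Czero | S m => Cadd (Csum f m) (f m) end.

Definition Cconv (u : nat -> Cplx) (l : Cplx) : Prop :=
  forall eps : R, eps > 0 -> exists N : nat, forall n : nat, (n >= N)%nat ->
    Cnorm (Csub (u n) l) < eps.

Definition Cseries (f : nat -> Cplx) (L : Cplx) : Prop := Cconv (Csum f) L.

Definition qinf (x q P : Cplx) : Prop := Cconv (qpoch x q) P.
Arguments Cpow _ _%_nat.
Arguments qpoch _ _ _%_nat.

From Stdlib Require Import Reals Lra Lia Psatz ClassicalEpsilon Classical.
From Coquelicot Require Complex.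
Open Scope R_scope.
Local Open Scope C_scope.

(** Every identity of [mainTheorem16] is a specialisation of one "master
  identity": for |p| < 1 (and b, apg avoiding the poles),

    sum_n (1 - a p^(2n)) (a;p)_n / (1 - a)
          * prod_(i<n) (b - a p^(i+1)) * prod_(i<n) (g - p^i)
          * (-1)^n p^(n(n-1)/2) / ((p;p)_n (b;p)_n (apg;p)_n)
      = (ap, bg; p)_oo / (b, apg; p)_oo,

  which is the d -> oo limit of Rogers' very-well-poised 6phi5 summation.
  It is proved by iterating contiguous relations: for each of the shifts
  a -> ap (when b = g = 0), g -> gp (when b = 0) and b -> bp, the difference
  of the two shifted series telescopes, so the sum is multiplied by an
  explicit factor at each shift.  Iterating j times and letting j -> oo
  (Tannery's theorem, using a bound on the terms uniform in j) reduces the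
  case b = g = 0 to a one-term series, then g to g = 0, then b to b = 0. *)

(** ** Complex arithmetic

  [Cplx] is definitionally Coquelicot's complex type, so its field theory
  and the properties of the modulus are imported from there. *)

Lemma Cfield_theory : field_theory Czero Cone Cadd Cmul Csub Copp Cdiv Cinv (@eq Cplx).
Proof. exact Complex.C_field_theory. Qed.
Add Field Cfield : Cfield_theory.
(* Arguments of these operations are complex expressions, even inside real formulas. *)
Arguments Cnorm z%_C.
Arguments qpoch x%_C q%_C n%_nat.
Arguments Cconv u%_function l%_C.

Lemma Cnorm_mult (z w : Cplx) : Cnorm (z * w) = (Cnorm z * Cnorm w)%R.
Proof. exact (Complex.Cmod_mult z w). Qed.
Lemma Cnorm_triangle (z w : Cplx) : (Cnorm (z + w) <= Cnorm z + Cnorm w)%R.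
Proof. exact (Complex.Cmod_triangle z w). Qed.
Lemma Cnorm_ge0 (z : Cplx) : (0 <= Cnorm z)%R.
Proof. exact (Complex.Cmod_ge_0 z). Qed.
Lemma Cnorm_opp (z : Cplx) : Cnorm (- z) = Cnorm z.
Proof. exact (Complex.Cmod_opp z). Qed.
Lemma Cnorm_one : Cnorm Cone = 1%R.
Proof. exact Complex.Cmod_1. Qed.
Lemma Cnorm_zero : Cnorm Czero = 0%R.
Proof. exact Complex.Cmod_0. Qed.
Lemma Cnorm_pow (z : Cplx) (n : nat) : Cnorm (z ^ n) = (Cnorm z ^ n)%R.
Proof. exact (Complex.Cmod_pow z n). Qed.
Lemma Cnorm_eq0 (z : Cplx) : Cnorm z = 0%R -> z = Czero.
Proof. exact (Complex.Cmod_eq_0 z). Qed.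
Lemma Cnorm_pos (z : Cplx) : z <> Czero -> (0 < Cnorm z)%R.
Proof. intro H. apply (proj1 (Complex.Cmod_gt_0 z)). exact H. Qed.
Lemma Cnorm_inv (z : Cplx) : z <> Czero -> Cnorm (Cinv z) = / Cnorm z.
Proof. exact (Complex.Cmod_inv z). Qed.
Lemma Cnorm_sub (z w : Cplx) : (Cnorm (z - w) <= Cnorm z + Cnorm w)%R.
Proof. unfold Csub. rewrite <- (Cnorm_opp w). apply Cnorm_triangle. Qed.
Lemma Cnorm_sub_rev (z w : Cplx) : (Cnorm z - Cnorm w <= Cnorm (z - w))%R.
Proof.
  assert (H := Cnorm_triangle (z - w) w).
  replace (z - w + w) with z in H by field. lra.
Qed.
Lemma Cnorm_sub_sym (z w : Cplx) : Cnorm (z - w) = Cnorm (w - z).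
Proof. replace (z - w) with (- (w - z)) by field. apply Cnorm_opp. Qed.
Lemma Cnorm_neq0 (z : Cplx) : z <> Czero -> Cnorm z <> 0%R.
Proof. intros H. apply Rgt_not_eq. apply Cnorm_pos; auto. Qed.
Lemma Cnorm_neg1_pow (n : nat) : Cnorm ((- Cone) ^ n) = 1%R.
Proof. rewrite Cnorm_pow, Cnorm_opp, Cnorm_one. apply pow1. Qed.

(* Componentwise control of the modulus, used to transfer completeness of R. *)
Lemma Cnorm_le_comp (z : Cplx) : (Cnorm z <= Rabs (fst z) + Rabs (snd z))%R.
Proof.
  assert (H1 := Rabs_pos (fst z)). assert (H2 := Rabs_pos (snd z)).
  unfold Cnorm. rewrite <- (sqrt_square (Rabs (fst z) + Rabs (snd z))) by lra.
  apply sqrt_le_1_alt. rewrite <- (pow2_abs (fst z)), <- (pow2_abs (snd z)). nra.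
Qed.
Lemma fst_le_Cnorm (z : Cplx) : (Rabs (fst z) <= Cnorm z)%R.
Proof. exact (Complex.re_le_Cmod z). Qed.
Lemma snd_le_Cnorm (z : Cplx) : (Rabs (snd z) <= Cnorm z)%R.
Proof.
  unfold Cnorm. rewrite <- sqrt_Rsqr_abs. apply sqrt_le_1_alt. unfold Rsqr.
  assert (0 <= fst z ^ 2)%R by (apply pow2_ge_0). simpl. lra.
Qed.

Lemma Cone_neq0 : Cone <> Czero.
Proof. unfold Cone, Czero. intros E. injection E. lra. Qed.
Lemma Cmul_neq0 (z w : Cplx) : z <> Czero -> w <> Czero -> z * w <> Czero.
Proof.
  intros H1 H2 Hc. apply (f_equal Cnorm) in Hc. rewrite Cnorm_mult, Cnorm_zero in Hc.
  apply Cnorm_pos in H1. apply Cnorm_pos in H2. nra.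
Qed.
Lemma Cmul_neq0_l (z w : Cplx) : z * w <> Czero -> z <> Czero.
Proof. intros H E. apply H. rewrite E. field. Qed.
Lemma Cmul_neq0_r (z w : Cplx) : z * w <> Czero -> w <> Czero.
Proof. intros H E. apply H. rewrite E. field. Qed.
Lemma Cone_sub_neq (k : Cplx) : k <> Cone -> Cone - k <> Czero.
Proof. intros H E. apply H. transitivity (Cone - (Cone - k)). field. rewrite E. field. Qed.

Lemma Cpow_S (z : Cplx) (n : nat) : z ^ S n = z * z ^ n.
Proof. reflexivity. Qed.
Lemma Cpow_O (z : Cplx) : z ^ O = Cone.
Proof. reflexivity. Qed.
Lemma Cpow_add (z : Cplx) (m n : nat) : z ^ (m + n) = z ^ m * z ^ n.
Proof. induction m; simpl. field. rewrite IHm. field. Qed.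
Lemma Cpow_mult_distr (z w : Cplx) (n : nat) : (z * w) ^ n = z ^ n * w ^ n.
Proof. induction n; simpl. field. rewrite IHn. field. Qed.
Lemma Cpow_opp (z : Cplx) (n : nat) : (- z) ^ n = (- Cone) ^ n * z ^ n.
Proof. induction n. simpl. field. rewrite !Cpow_S, IHn. field. Qed.
Lemma Cpow_neq0 (z : Cplx) (n : nat) : z <> Czero -> z ^ n <> Czero.
Proof.
  intros H Hc. apply Cnorm_neq0 in H. apply (f_equal Cnorm) in Hc.
  rewrite Cnorm_pow, Cnorm_zero in Hc. apply (pow_nonzero (Cnorm z) n H Hc).
Qed.
Lemma Cpow_inv (q : Cplx) (n : nat) : q <> Czero -> (Cinv q) ^ n = Cinv (q ^ n).
Proof.
  intros H. induction n. simpl. field. exact Cone_neq0.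
  rewrite !Cpow_S, IHn. field. split; auto. apply Cpow_neq0; auto.
Qed.
Lemma Cpow_zeroS (n : nat) : Czero ^ S n = Czero.
Proof. rewrite Cpow_S. field. Qed.
Lemma Cpow_one (n : nat) : Cone ^ n = Cone.
Proof. induction n; simpl. reflexivity. rewrite IHn. field. Qed.
Lemma Cneg1_sq (n : nat) : (- Cone) ^ n * (- Cone) ^ n = Cone.
Proof. rewrite <- Cpow_mult_distr. replace (- Cone * - Cone) with Cone by field. apply Cpow_one. Qed.
Lemma Cpow2 (q : Cplx) : q ^ 2 = q * q.
Proof. simpl. field. Qed.
Lemma Cpow4 (q : Cplx) : q ^ 4 = q ^ 2 * q ^ 2.
Proof. simpl. field. Qed.
Lemma Cpow2_pow (q : Cplx) (m : nat) : (q ^ 2) ^ m = q ^ m * q ^ m.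
Proof. rewrite Cpow2, Cpow_mult_distr. reflexivity. Qed.
Lemma Cpow_double (q : Cplx) (n : nat) : q ^ (2 * n) = q ^ n * q ^ n.
Proof. replace (2 * n)%nat with (n + n)%nat by lia. apply Cpow_add. Qed.
Lemma Cpow_quadruple (q : Cplx) (n : nat) : q ^ (4 * n) = q ^ n * q ^ n * (q ^ n * q ^ n).
Proof. replace (4 * n)%nat with ((n + n) + (n + n))%nat by lia. rewrite !Cpow_add. reflexivity. Qed.

(** ** Convergence of complex sequences *)

Lemma pow_le1 (x : R) (n : nat) : (0 <= x <= 1)%R -> (x ^ n <= 1)%R.
Proof. intros H. induction n; simpl. lra. assert (0 <= x ^ n)%R by (apply pow_le; lra). nra. Qed.

Lemma geom_small (th c eps : R) : (0 <= th < 1)%R -> (0 < eps)%R ->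
  exists N, forall n, (n >= N)%nat -> (c * th ^ n < eps)%R.
Proof.
  intros Hth Heps.
  destruct (Rle_lt_dec c 0) as [Hc|Hc].
  - exists O. intros n _. assert (0 <= th ^ n)%R by (apply pow_le; lra). nra.
  - destruct (pow_lt_1_zero th) with (y := (eps / c)%R) as [N HN].
    { rewrite Rabs_pos_eq; lra. }
    { apply Rdiv_lt_0_compat; lra. }
    exists N. intros n Hn. specialize (HN n Hn). rewrite Rabs_pos_eq in HN by (apply pow_le; lra).
    apply Rmult_lt_compat_l with (r := c) in HN; auto.
    replace (c * (eps / c))%R with eps in HN by (field; lra). exact HN.
Qed.

Lemma finite_max (a : nat -> R) (N : nat) :
  exists C0, (0 <= C0)%R /\ forall n, (n <= N)%nat -> (a n <= C0)%R.
Proof.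
  induction N.
  - exists (Rmax 0 (a O)). split. apply Rmax_l. intros n Hn. replace n with O by lia. apply Rmax_r.
  - destruct IHN as [c [Hc Hc']]. exists (Rmax c (a (S N))). split.
    { apply Rle_trans with c; auto. apply Rmax_l. }
    intros n Hn. destruct (Nat.eq_dec n (S N)). subst. apply Rmax_r.
    apply Rle_trans with c. apply Hc'. lia. apply Rmax_l.
Qed.
Lemma finite_min (a : nat -> R) (N : nat) : (forall n, (0 < a n)%R) ->
  exists c, (0 < c)%R /\ forall n, (n <= N)%nat -> (c <= a n)%R.
Proof.
  intros H. induction N.
  - exists (a O). split; auto. intros n Hn. replace n with O by lia. lra.
  - destruct IHN as [c [Hc Hc']]. exists (Rmin c (a (S N))). split. apply Rmin_pos; auto.
    intros n Hn. destruct (Nat.eq_dec n (S N)). subst. apply Rmin_r.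
    apply Rle_trans with c. apply Rmin_l. apply Hc'. lia.
Qed.

Lemma Cconv_unique (u : nat -> Cplx) (l1 l2 : Cplx) : Cconv u l1 -> Cconv u l2 -> l1 = l2.
Proof.
  intros H1 H2.
  destruct (Req_dec (Cnorm (l1 - l2)) 0) as [E|E].
  { apply Cnorm_eq0 in E. transitivity (l1 - l2 + l2). field. rewrite E. field. }
  assert (Hp : (0 < Cnorm (l1 - l2))%R) by (assert (H := Cnorm_ge0 (l1 - l2)); lra).
  destruct (H1 (Cnorm (l1 - l2) / 2)%R) as [N1 HN1]. lra.
  destruct (H2 (Cnorm (l1 - l2) / 2)%R) as [N2 HN2]. lra.
  specialize (HN1 (N1 + N2)%nat ltac:(lia)). specialize (HN2 (N1 + N2)%nat ltac:(lia)).
  assert (H := Cnorm_triangle (l1 - u (N1 + N2)%nat) (u (N1 + N2)%nat - l2)).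
  replace (l1 - u (N1 + N2)%nat + (u (N1 + N2)%nat - l2)) with (l1 - l2) in H by field.
  rewrite (Cnorm_sub_sym l1 (u _)) in H. lra.
Qed.

Lemma Cconv_ext (u v : nat -> Cplx) (l : Cplx) : (forall n, u n = v n) -> Cconv u l -> Cconv v l.
Proof. intros E H eps He. destruct (H eps He) as [N HN]. exists N. intros n Hn. rewrite <- E. auto. Qed.

Lemma Cconv_eventually_const (u : nat -> Cplx) (c : Cplx) (N : nat) :
  (forall n, (n >= N)%nat -> u n = c) -> Cconv u c.
Proof.
  intros H eps He. exists N. intros n Hn. rewrite H by auto.
  replace (c - c) with Czero by field. rewrite Cnorm_zero. lra.
Qed.

Lemma Cconv_const (c : Cplx) : Cconv (fun _ => c) c.
Proof. apply Cconv_eventually_const with O. auto. Qed.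

Lemma Cconv_add (u v : nat -> Cplx) (l m : Cplx) :
  Cconv u l -> Cconv v m -> Cconv (fun n => u n + v n) (l + m).
Proof.
  intros H1 H2 eps He.
  destruct (H1 (eps/2)%R) as [N1 HN1]. lra. destruct (H2 (eps/2)%R) as [N2 HN2]. lra.
  exists (N1 + N2)%nat. intros n Hn. specialize (HN1 n ltac:(lia)). specialize (HN2 n ltac:(lia)).
  replace (u n + v n - (l + m)) with ((u n - l) + (v n - m)) by field.
  assert (H := Cnorm_triangle (u n - l) (v n - m)). lra.
Qed.

Lemma Cconv_opp (u : nat -> Cplx) (l : Cplx) : Cconv u l -> Cconv (fun n => - u n) (- l).
Proof.
  intros H eps He. destruct (H eps He) as [N HN]. exists N. intros n Hn.
  replace (- u n - - l) with (- (u n - l)) by field. rewrite Cnorm_opp. auto.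
Qed.

Lemma Cconv_sub (u v : nat -> Cplx) (l m : Cplx) :
  Cconv u l -> Cconv v m -> Cconv (fun n => u n - v n) (l - m).
Proof. intros. apply Cconv_add; auto. apply Cconv_opp; auto. Qed.

Lemma Cconv_bounded (u : nat -> Cplx) (l : Cplx) :
  Cconv u l -> exists M, (0 <= M)%R /\ forall n, (Cnorm (u n) <= M)%R.
Proof.
  intros H. destruct (H 1%R) as [N HN]. lra.
  destruct (finite_max (fun n => Cnorm (u n)) N) as [M1 [HM1 HM1']].
  exists (Rmax M1 (Cnorm l + 1)). split. apply Rle_trans with M1; auto. apply Rmax_l.
  intros n. destruct (Arith.Compare_dec.le_lt_dec n N).
  - apply Rle_trans with M1. auto. apply Rmax_l.
  - apply Rle_trans with (Cnorm l + 1)%R. 2: apply Rmax_r.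
    specialize (HN n ltac:(lia)). assert (Hx := Cnorm_triangle (u n - l) l).
    replace (u n - l + l) with (u n) in Hx by field. lra.
Qed.

Lemma Cconv_mult (u v : nat -> Cplx) (l m : Cplx) :
  Cconv u l -> Cconv v m -> Cconv (fun n => u n * v n) (l * m).
Proof.
  intros H1 H2. destruct (Cconv_bounded u l H1) as [M [HM HM']].
  intros eps He.
  set (e1 := (eps / (2 * (Cnorm m + 1)))%R).
  set (e2 := (eps / (2 * (M + 1)))%R).
  assert (Hm := Cnorm_ge0 m).
  assert (He1 : (0 < e1)%R) by (unfold e1; apply Rdiv_lt_0_compat; lra).
  assert (He2 : (0 < e2)%R) by (unfold e2; apply Rdiv_lt_0_compat; lra).
  destruct (H1 e1 He1) as [N1 HN1]. destruct (H2 e2 He2) as [N2 HN2].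
  exists (N1 + N2)%nat. intros n Hn. specialize (HN1 n ltac:(lia)). specialize (HN2 n ltac:(lia)).
  replace (u n * v n - l * m) with (u n * (v n - m) + (u n - l) * m) by field.
  eapply Rle_lt_trans. apply Cnorm_triangle. rewrite !Cnorm_mult.
  specialize (HM' n). assert (H0 := Cnorm_ge0 (u n)).
  assert (H0' := Cnorm_ge0 (v n - m)). assert (H0'' := Cnorm_ge0 (u n - l)).
  assert (A1 : (Cnorm (u n) * Cnorm (v n - m) <= M * e2)%R) by (apply Rmult_le_compat; lra).
  assert (A2 : (Cnorm (u n - l) * Cnorm m <= e1 * Cnorm m)%R) by (apply Rmult_le_compat_r; lra).
  assert (A3 : (M * e2 < eps / 2)%R).
  { unfold e2. apply Rmult_lt_reg_r with (2 * (M + 1))%R. lra.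
    replace (M * (eps / (2 * (M + 1))) * (2 * (M + 1)))%R with (M * eps)%R by (field; lra). nra. }
  assert (A4 : (e1 * Cnorm m < eps / 2)%R).
  { unfold e1. apply Rmult_lt_reg_r with (2 * (Cnorm m + 1))%R. lra.
    replace (eps / (2 * (Cnorm m + 1)) * Cnorm m * (2 * (Cnorm m + 1)))%R
      with (Cnorm m * eps)%R by (field; lra). nra. }
  lra.
Qed.

Lemma Cconv_inv (u : nat -> Cplx) (l : Cplx) :
  Cconv u l -> l <> Czero -> Cconv (fun n => Cinv (u n)) (Cinv l).
Proof.
  intros H Hl. assert (Hp := Cnorm_pos l Hl).
  destruct (H (Cnorm l / 2)%R) as [N0 HN0]. lra.
  (* eventually |u n| >= |l|/2, which controls |1/u n - 1/l| by |u n - l| *)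
  assert (Hlow : forall n, (n >= N0)%nat -> (Cnorm l / 2 <= Cnorm (u n))%R).
  { intros n Hn. specialize (HN0 n Hn). assert (Hx := Cnorm_sub_rev l (l - u n)).
    replace (l - (l - u n)) with (u n) in Hx by field. rewrite Cnorm_sub_sym in Hx. lra. }
  intros eps He.
  destruct (H (eps * (Cnorm l * Cnorm l / 2))%R) as [N1 HN1]. apply Rmult_lt_0_compat; nra.
  exists (N0 + N1)%nat. intros n Hn. specialize (Hlow n ltac:(lia)). specialize (HN1 n ltac:(lia)).
  assert (Hu : u n <> Czero). { intros E. rewrite E, Cnorm_zero in Hlow. lra. }
  replace (Cinv (u n) - Cinv l) with ((l - u n) * Cinv (u n) * Cinv l) by (field; auto).
  rewrite !Cnorm_mult, !Cnorm_inv by auto. rewrite Cnorm_sub_sym.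
  assert (Hun := Cnorm_pos _ Hu).
  apply Rmult_lt_reg_r with (Cnorm (u n) * Cnorm l)%R. nra.
  field_simplify; try lra.
  apply Rlt_le_trans with (eps * (Cnorm l * Cnorm l / 2))%R. lra.
  apply Rle_trans with (eps * (Cnorm l * Cnorm (u n)))%R. 2: lra.
  apply Rmult_le_compat_l; nra.
Qed.

Lemma Cconv_div (u v : nat -> Cplx) (l m : Cplx) :
  Cconv u l -> Cconv v m -> m <> Czero -> Cconv (fun n => u n / v n) (l / m).
Proof. intros. unfold Cdiv. apply Cconv_mult; auto. apply Cconv_inv; auto. Qed.

Lemma Cconv_subseq (u : nat -> Cplx) (l : Cplx) (phi : nat -> nat) :
  (forall n, (n <= phi n)%nat) -> Cconv u l -> Cconv (fun n => u (phi n)) l.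
Proof.
  intros Hphi H eps He. destruct (H eps He) as [N HN]. exists N. intros n Hn.
  apply HN. specialize (Hphi n). lia.
Qed.

Lemma Cconv_le (u : nat -> Cplx) (l a : Cplx) (B : R) (N : nat) : Cconv u l ->
  (forall n, (n >= N)%nat -> (Cnorm (u n - a) <= B)%R) -> (Cnorm (l - a) <= B)%R.
Proof.
  intros H HB. destruct (Rle_lt_dec (Cnorm (l - a)) B) as [h|h]; auto.
  destruct (H (Cnorm (l - a) - B)%R) as [N1 HN1]. lra.
  specialize (HN1 (N + N1)%nat ltac:(lia)). specialize (HB (N + N1)%nat ltac:(lia)).
  assert (Hx := Cnorm_triangle (l - u (N + N1)%nat) (u (N + N1)%nat - a)).
  replace (l - u (N + N1)%nat + (u (N + N1)%nat - a)) with (l - a) in Hx by field.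
  rewrite (Cnorm_sub_sym l (u _)) in Hx. lra.
Qed.

Lemma Cconv_norm_lb (u : nat -> Cplx) (l : Cplx) (c : R) :
  Cconv u l -> (forall n, (c <= Cnorm (u n))%R) -> (c <= Cnorm l)%R.
Proof.
  intros H Hc. destruct (Rle_lt_dec c (Cnorm l)) as [h|h]; auto.
  destruct (H (c - Cnorm l)%R) as [N HN]. lra. specialize (HN N (le_n _)). specialize (Hc N).
  assert (Hx := Cnorm_triangle (u N - l) l). replace (u N - l + l) with (u N) in Hx by field. lra.
Qed.

Lemma Cconv_geom (u : nat -> Cplx) (l : Cplx) (C0 th : R) : (0 <= th < 1)%R ->
  (forall n, (Cnorm (u n - l) <= C0 * th ^ n)%R) -> Cconv u l.
Proof.
  intros Hth H eps He. destruct (geom_small th C0 eps Hth He) as [N HN]. exists N. intros n Hn.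
  specialize (HN n Hn). specialize (H n). lra.
Qed.

Lemma Cconv_pow_zero (p : Cplx) : (Cnorm p < 1)%R -> Cconv (fun j => p ^ j) Czero.
Proof.
  intros Hp. apply Cconv_geom with (C0 := 1%R) (th := Cnorm p). split; auto. apply Cnorm_ge0.
  intros n. replace (p ^ n - Czero) with (p ^ n) by field. rewrite Cnorm_pow. lra.
Qed.

(** ** Completeness: sequences with geometrically small increments converge *)

Lemma Cauchy_geom_bound (u : nat -> Cplx) (C0 th : R) : (0 <= C0)%R -> (0 <= th < 1)%R ->
  (forall n, (Cnorm (u (S n) - u n) <= C0 * th ^ n)%R) ->
  forall n m, (m >= n)%nat -> (Cnorm (u m - u n) <= C0 * th ^ n / (1 - th))%R.
Proof.
  intros HC Hth H n m Hm. replace m with (n + (m - n))%nat by lia.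
  assert (Hn : (0 <= C0 * th ^ n)%R) by (apply Rmult_le_pos; [lra | apply pow_le; lra]).
  (* the partial geometric sum gives the sharper bound C0 th^n (1 - th^k) / (1 - th) *)
  assert (Hk : forall k, (Cnorm (u (n + k)%nat - u n) <= C0 * th ^ n * (1 - th ^ k) / (1 - th))%R).
  { induction k.
    - rewrite Nat.add_0_r. replace (u n - u n) with Czero by field. rewrite Cnorm_zero. simpl.
      replace (C0 * th ^ n * (1 - 1) / (1 - th))%R with 0%R by (field; lra). lra.
    - replace (n + S k)%nat with (S (n + k)) by lia.
      assert (Hx := Cnorm_triangle (u (S (n + k)) - u (n + k)%nat) (u (n + k)%nat - u n)).
      replace (u (S (n + k)) - u (n + k)%nat + (u (n + k)%nat - u n))
        with (u (S (n + k)) - u n) in Hx by field.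
      specialize (H (n + k)%nat). rewrite pow_add in H.
      apply Rle_trans with (C0 * (th ^ n * th ^ k) + C0 * th ^ n * (1 - th ^ k) / (1 - th))%R. lra.
      right. simpl. field. lra. }
  eapply Rle_trans. apply Hk.
  assert (0 <= th ^ (m - n))%R by (apply pow_le; lra).
  unfold Rdiv. apply Rmult_le_compat_r. left. apply Rinv_0_lt_compat. lra. nra.
Qed.

Lemma Cauchy_geom (u : nat -> Cplx) (C0 th : R) : (0 <= C0)%R -> (0 <= th < 1)%R ->
  (forall n, (Cnorm (u (S n) - u n) <= C0 * th ^ n)%R) ->
  exists l, Cconv u l /\ forall n, (Cnorm (l - u n) <= C0 * th ^ n / (1 - th))%R.
Proof.
  intros HC Hth H. assert (HB := Cauchy_geom_bound u C0 th HC Hth H).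
  assert (Hsmall : forall eps, (0 < eps)%R -> exists N, forall n m, (n >= N)%nat -> (m >= N)%nat ->
            (Cnorm (u m - u n) < eps)%R).
  { intros eps He. destruct (geom_small th (C0 / (1 - th)) eps Hth He) as [N HN]. exists N.
    intros n m Hn Hm. destruct (Arith.Compare_dec.le_lt_dec n m).
    - eapply Rle_lt_trans. apply HB; lia. specialize (HN n Hn).
      replace (C0 * th ^ n / (1 - th))%R with (C0 / (1 - th) * th ^ n)%R by (field; lra). auto.
    - rewrite Cnorm_sub_sym. eapply Rle_lt_trans. apply HB; lia. specialize (HN m Hm).
      replace (C0 * th ^ m / (1 - th))%R with (C0 / (1 - th) * th ^ m)%R by (field; lra). auto. }
  destruct (R_complete (fun n => fst (u n))) as [lr Hlr].
  { intros eps He. destruct (Hsmall eps He) as [N HN]. exists N. intros n m Hn Hm. unfold Rdist.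
    eapply Rle_lt_trans. 2: apply (HN m n Hm Hn). apply (fst_le_Cnorm (u n - u m)). }
  destruct (R_complete (fun n => snd (u n))) as [li Hli].
  { intros eps He. destruct (Hsmall eps He) as [N HN]. exists N. intros n m Hn Hm. unfold Rdist.
    eapply Rle_lt_trans. 2: apply (HN m n Hm Hn). apply (snd_le_Cnorm (u n - u m)). }
  assert (Hc : Cconv u (lr, li)).
  { intros eps He. destruct (Hlr (eps/2)%R) as [N1 HN1]. lra.
    destruct (Hli (eps/2)%R) as [N2 HN2]. lra.
    exists (N1 + N2)%nat. intros n Hn. specialize (HN1 n ltac:(lia)). specialize (HN2 n ltac:(lia)).
    unfold Rdist in *. eapply Rle_lt_trans. apply Cnorm_le_comp.
    replace (fst (u n - (lr, li))) with (fst (u n) - lr)%R by (unfold Csub, Cadd, Copp; simpl; ring).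
    replace (snd (u n - (lr, li))) with (snd (u n) - li)%R by (unfold Csub, Cadd, Copp; simpl; ring).
    lra. }
  exists (lr, li). split; auto. intros n. apply Cconv_le with (u := u) (N := n); auto.
Qed.

(** ** Series *)

Lemma Csum_S (f : nat -> Cplx) (n : nat) : Csum f (S n) = Csum f n + f n.
Proof. reflexivity. Qed.
Lemma Csum_O (f : nat -> Cplx) : Csum f O = Czero.
Proof. reflexivity. Qed.
Lemma Csum_ext (f g : nat -> Cplx) (n : nat) : (forall i, f i = g i) -> Csum f n = Csum g n.
Proof. intros H. induction n. reflexivity. rewrite !Csum_S, IHn, H. reflexivity. Qed.

Lemma Cseries_ext (f g : nat -> Cplx) (L : Cplx) : (forall n, f n = g n) -> Cseries f L -> Cseries g L.
Proof. intros E H. unfold Cseries in *. apply Cconv_ext with (Csum f); auto. intros. apply Csum_ext; auto. Qed.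

Lemma Cseries_unique (f : nat -> Cplx) (L1 L2 : Cplx) : Cseries f L1 -> Cseries f L2 -> L1 = L2.
Proof. apply Cconv_unique. Qed.

Lemma Cseries_geom (f : nat -> Cplx) (C0 th : R) : (0 <= C0)%R -> (0 <= th < 1)%R ->
  (forall n, (Cnorm (f n) <= C0 * th ^ n)%R) ->
  exists L, Cseries f L /\ forall N, (Cnorm (L - Csum f N) <= C0 * th ^ N / (1 - th))%R.
Proof.
  intros HC Hth H. apply Cauchy_geom; auto. intros n. rewrite Csum_S.
  replace (Csum f n + f n - Csum f n) with (f n) by field. auto.
Qed.

Lemma Cseries_tail (f : nat -> Cplx) (L : Cplx) (C0 th : R) : (0 <= C0)%R -> (0 <= th < 1)%R ->
  (forall n, (Cnorm (f n) <= C0 * th ^ n)%R) -> Cseries f L ->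
  forall N, (Cnorm (L - Csum f N) <= C0 * th ^ N / (1 - th))%R.
Proof.
  intros HC Hth H HL. destruct (Cseries_geom f C0 th HC Hth H) as [L' [HL' HB]].
  rewrite (Cseries_unique f L L'); auto.
Qed.

Lemma Cseries_add (f g : nat -> Cplx) (L M : Cplx) :
  Cseries f L -> Cseries g M -> Cseries (fun n => f n + g n) (L + M).
Proof.
  intros H1 H2. unfold Cseries. apply Cconv_ext with (fun n => Csum f n + Csum g n).
  { intros n. induction n. simpl. unfold Czero, Cadd. simpl. f_equal; ring.
    rewrite !Csum_S, <- IHn. field. }
  apply Cconv_add; auto.
Qed.

Lemma Cseries_scal (c : Cplx) (f : nat -> Cplx) (L : Cplx) :
  Cseries f L -> Cseries (fun n => c * f n) (c * L).
Proof.
  intros H. unfold Cseries. apply Cconv_ext with (fun n => c * Csum f n).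
  { intros n. induction n. simpl. unfold Czero, Cmul. simpl. f_equal; ring.
    rewrite !Csum_S, <- IHn. field. }
  apply Cconv_mult; auto. apply Cconv_const.
Qed.

Lemma Cseries_telescope (f G : nat -> Cplx) :
  (forall n, f n = G n - G (S n)) -> Cconv G Czero -> Cseries f (G O).
Proof.
  intros E H. unfold Cseries. apply Cconv_ext with (fun n => G O - G n).
  { intros n. induction n. rewrite Csum_O. field. rewrite Csum_S, <- IHn, E. field. }
  assert (H2 := Cconv_sub _ _ _ _ (Cconv_const (G O)) H).
  replace (G O - Czero) with (G O) in H2 by field. exact H2.
Qed.

Lemma Cseries_finite (f : nat -> Cplx) (N : nat) :
  (forall n, (n >= N)%nat -> f n = Czero) -> Cseries f (Csum f N).
Proof.
  intros H. unfold Cseries. apply Cconv_eventually_const with N. intros n Hn.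
  induction Hn. reflexivity. rewrite Csum_S, IHHn, H by lia. field.
Qed.

Lemma Cseries_telescoping_relation (f1 f2 G : nat -> Cplx) (al be L1 L2 : Cplx) :
  Cseries f1 L1 -> Cseries f2 L2 ->
  (forall n, al * f1 n - be * f2 n = G n - G (S n)) -> G O = Czero -> Cconv G Czero ->
  al * L1 = be * L2.
Proof.
  intros H1 H2 HG HG0 HGc.
  assert (S1 := Cseries_add _ _ _ _ (Cseries_scal al _ _ H1) (Cseries_scal (- be) _ _ H2)).
  assert (S2 := Cseries_telescope _ G (fun n => eq_refl) HGc).
  assert (S3 : Cseries (fun n => G n - G (S n)) (al * L1 + - be * L2)).
  { apply Cseries_ext with (2 := S1). intros n. rewrite <- HG. field. }
  assert (E := Cseries_unique _ _ _ S2 S3). rewrite HG0 in E.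
  transitivity (al * L1 + - be * L2 + be * L2). field. rewrite <- E. field.
Qed.

(* A chosen sum of a series, meaningful whenever the series converges. *)
Definition csum (f : nat -> Cplx) : Cplx := epsilon (inhabits Czero) (fun L => Cseries f L).
Lemma csum_spec (f : nat -> Cplx) : (exists L, Cseries f L) -> Cseries f (csum f).
Proof. intros H. unfold csum. apply epsilon_spec. exact H. Qed.

Lemma csum_geom (f : nat -> Cplx) (C0 : R) : (0 <= C0)%R ->
  (forall n, (Cnorm (f n) <= C0 * (1/2) ^ n)%R) -> Cseries f (csum f).
Proof.
  intros HC H. apply csum_spec.
  destruct (Cseries_geom f C0 (1/2) HC) as [L [HL _]]; [lra | auto |]. exists L; auto.
Qed.

Lemma Cconv_Csum (f : nat -> nat -> Cplx) (g : nat -> Cplx) :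
  (forall n, Cconv (fun j => f j n) (g n)) -> forall N, Cconv (fun j => Csum (f j) N) (Csum g N).
Proof. intros H N. induction N; simpl. apply Cconv_const. apply Cconv_add; auto. Qed.

Lemma Tannery (f : nat -> nat -> Cplx) (g : nat -> Cplx) (C0 th : R) (Lj : nat -> Cplx) :
  (0 <= C0)%R -> (0 <= th < 1)%R ->
  (forall n, Cconv (fun j => f j n) (g n)) ->
  (forall j n, (Cnorm (f j n) <= C0 * th ^ n)%R) ->
  (forall j, Cseries (f j) (Lj j)) ->
  exists L, Cseries g L /\ Cconv Lj L.
Proof.
  intros HC Hth Hpt Hb HL.
  assert (Hg : forall n, (Cnorm (g n) <= C0 * th ^ n)%R).
  { intros n. replace (g n) with (g n - Czero) by field.
    apply Cconv_le with (u := fun j => f j n) (N := O); auto. intros j _.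
    replace (f j n - Czero) with (f j n) by field. auto. }
  destruct (Cseries_geom g C0 th HC Hth Hg) as [L [HgL HgB]].
  exists L. split; auto.
  intros eps He.
  destruct (geom_small th (2 * C0 / (1 - th))%R (eps / 2)%R Hth) as [N HN]. lra.
  specialize (HN N (le_n _)).
  destruct (Cconv_Csum f g Hpt N (eps / 2)%R) as [J HJ]. lra.
  exists J. intros j Hj. specialize (HJ j Hj).
  assert (T1 := Cseries_tail (f j) (Lj j) C0 th HC Hth (Hb j) (HL j) N).
  assert (T2 := HgB N).
  replace (Lj j - L) with ((Lj j - Csum (f j) N) + (Csum (f j) N - Csum g N) - (L - Csum g N)) by field.
  eapply Rle_lt_trans. apply Cnorm_sub. eapply Rle_lt_trans. apply Rplus_le_compat_r. apply Cnorm_triangle.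
  replace (2 * C0 / (1 - th) * th ^ N)%R
    with (C0 * th ^ N / (1 - th) + C0 * th ^ N / (1 - th))%R in HN by (field; lra).
  lra.
Qed.

(** ** Finite products *)

Fixpoint prodC (f : nat -> Cplx) (n : nat) : Cplx :=
  match n with O => Cone | S m => prodC f m * f m end.

Lemma prodC_S (f : nat -> Cplx) (n : nat) : prodC f (S n) = prodC f n * f n.
Proof. reflexivity. Qed.

Lemma prodC_ext (f g : nat -> Cplx) (n : nat) :
  (forall i, (i < n)%nat -> f i = g i) -> prodC f n = prodC g n.
Proof.
  intros H. induction n. reflexivity.
  simpl. rewrite IHn by (intros; apply H; lia). rewrite H by lia. reflexivity.
Qed.

Lemma prodC_add (f : nat -> Cplx) (m n : nat) :
  prodC f (m + n) = prodC f m * prodC (fun i => f (m + i)%nat) n.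
Proof.
  induction n. rewrite Nat.add_0_r. simpl. field.
  replace (m + S n)%nat with (S (m + n)) by lia. simpl. rewrite IHn. field.
Qed.

Lemma prodC_neq0 (f : nat -> Cplx) (n : nat) :
  (forall i, (i < n)%nat -> f i <> Czero) -> prodC f n <> Czero.
Proof.
  intros H. induction n. exact Cone_neq0.
  simpl. apply Cmul_neq0. apply IHn. intros. apply H. lia. apply H. lia.
Qed.

Lemma prodC_one (n : nat) : prodC (fun _ => Cone) n = Cone.
Proof. induction n. reflexivity. rewrite prodC_S, IHn. field. Qed.

Lemma prodC_norm_bound (f : nat -> Cplx) (M : R) (n : nat) :
  (forall i, (Cnorm (f i) <= M)%R) -> (Cnorm (prodC f n) <= M ^ n)%R.
Proof.
  intros H. induction n. change (prodC f 0) with Cone. rewrite Cnorm_one. simpl. lra.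
  rewrite prodC_S. simpl pow. rewrite Cnorm_mult, (Rmult_comm M).
  apply Rmult_le_compat; try apply Cnorm_ge0; auto.
Qed.

Lemma Cconv_prodC (f : nat -> nat -> Cplx) (g : nat -> Cplx) (n : nat) :
  (forall i, Cconv (fun j => f j i) (g i)) -> Cconv (fun j => prodC (f j) n) (prodC g n).
Proof. intros H. induction n; simpl. apply Cconv_const. apply Cconv_mult; auto. Qed.

(** ** q-Pochhammer symbols *)

Lemma qpoch_S (x p : Cplx) (n : nat) : qpoch x p (S n) = qpoch x p n * (Cone - x * p ^ n).
Proof. reflexivity. Qed.
Lemma qpoch_O (x p : Cplx) : qpoch x p O = Cone.
Proof. reflexivity. Qed.
Lemma qpoch_prodC (x p : Cplx) (n : nat) : qpoch x p n = prodC (fun i => Cone - x * p ^ i) n.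
Proof. induction n. reflexivity. rewrite qpoch_S, IHn. reflexivity. Qed.
Lemma qpoch_ext (x y p : Cplx) (n : nat) : x = y -> qpoch x p n = qpoch y p n.
Proof. intros ->. reflexivity. Qed.

Lemma qpoch_add (x p : Cplx) (m n : nat) : qpoch x p (m + n) = qpoch x p m * qpoch (x * p ^ m) p n.
Proof.
  rewrite !qpoch_prodC, prodC_add. f_equal. apply prodC_ext. intros i _. rewrite Cpow_add. field.
Qed.
Lemma qpoch_shift1 (x p : Cplx) (n : nat) : qpoch x p (S n) = (Cone - x) * qpoch (x * p) p n.
Proof.
  replace (S n) with (1 + n)%nat by lia. rewrite qpoch_add. simpl. f_equal. field. f_equal. field.
Qed.
Lemma qpoch_zero (p : Cplx) (n : nat) : qpoch Czero p n = Cone.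
Proof. induction n. reflexivity. rewrite qpoch_S, IHn. field. Qed.
Lemma qpoch_first_factor (x p : Cplx) : (forall k, qpoch x p k <> Czero) -> Cone - x <> Czero.
Proof.
  intros H. specialize (H 1%nat). rewrite qpoch_S, qpoch_O, Cpow_O in H.
  intros E. apply H. rewrite <- E. field.
Qed.
Lemma qpoch_times_zero (x p : Cplx) (k : nat) : qpoch (x * Czero) p k = Cone.
Proof. rewrite <- (qpoch_zero p k). apply qpoch_ext. field. Qed.

Lemma qpoch_sq (x p : Cplx) (n : nat) : qpoch x p n * qpoch (- x) p n = qpoch (x * x) (p * p) n.
Proof. induction n. simpl. field. rewrite !qpoch_S, <- IHn, Cpow_mult_distr. field. Qed.
Lemma qpoch_double (x q : Cplx) (n : nat) : qpoch x q (2 * n) = qpoch x (q * q) n * qpoch (x * q) (q * q) n.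
Proof.
  induction n. simpl. field.
  replace (2 * S n)%nat with (S (S (2 * n))) by lia.
  rewrite !qpoch_S, IHn, Cpow_mult_distr, Cpow_S, Cpow_double. field.
Qed.

Lemma norm_pow_le1 (p : Cplx) (i : nat) : (Cnorm p <= 1)%R -> (Cnorm (p ^ i) <= 1)%R.
Proof. intros H. rewrite Cnorm_pow. apply pow_le1. split; auto. apply Cnorm_ge0. Qed.

Lemma qpoch_neq0_small (x p : Cplx) (n : nat) :
  (Cnorm x < 1)%R -> (Cnorm p <= 1)%R -> qpoch x p n <> Czero.
Proof.
  intros Hx Hp. rewrite qpoch_prodC. apply prodC_neq0. intros i _ E.
  assert (Hn : Cnorm (x * p ^ i) = 1%R).
  { replace (x * p ^ i) with Cone. apply Cnorm_one.
    transitivity (Cone - (Cone - x * p ^ i)). rewrite E. field. field. }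
  rewrite Cnorm_mult in Hn. assert (H1 := norm_pow_le1 p i Hp). assert (H0 := Cnorm_ge0 x).
  assert (0 <= Cnorm (p ^ i))%R by apply Cnorm_ge0. nra.
Qed.

Lemma qinf_zero (p : Cplx) : qinf Czero p Cone.
Proof. apply Cconv_ext with (fun _ => Cone). intros n. rewrite qpoch_zero. reflexivity. apply Cconv_const. Qed.
Lemma qinf_ext (x y p P : Cplx) : x = y -> qinf x p P -> qinf y p P.
Proof. intros ->. auto. Qed.
Lemma qinf_prodC (x p P : Cplx) : qinf x p P -> Cconv (prodC (fun i => Cone - x * p ^ i)) P.
Proof. intros H. apply Cconv_ext with (qpoch x p). intros n. apply qpoch_prodC. exact H. Qed.

Lemma Cconv_qpoch (x : nat -> Cplx) (x0 p : Cplx) (n : nat) :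
  Cconv x x0 -> Cconv (fun j => qpoch (x j) p n) (qpoch x0 p n).
Proof.
  intros H. apply Cconv_ext with (fun j => prodC (fun i => Cone - x j * p ^ i) n).
  { intros j. rewrite qpoch_prodC. reflexivity. }
  rewrite qpoch_prodC. apply Cconv_prodC with (f := fun j i => Cone - x j * p ^ i). intros i.
  apply Cconv_sub. apply Cconv_const. apply Cconv_mult. auto. apply Cconv_const.
Qed.

Lemma factor_bound (u v p : Cplx) (i : nat) :
  (Cnorm p <= 1)%R -> (Cnorm (u - v * p ^ i)%C <= Cnorm u + Cnorm v)%R.
Proof.
  intros H. eapply Rle_trans. apply Cnorm_sub. rewrite Cnorm_mult.
  assert (H1 := norm_pow_le1 p i H). assert (H2 := Cnorm_ge0 v). nra.
Qed.

Lemma qpoch_bound (x p : Cplx) (n : nat) : (Cnorm p <= 1)%R -> (Cnorm (qpoch x p n) <= (1 + Cnorm x) ^ n)%R.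
Proof.
  intros H. rewrite qpoch_prodC. apply prodC_norm_bound. intros i.
  rewrite <- Cnorm_one. apply factor_bound; auto.
Qed.

Lemma exp_mono_le (x y : R) : (x <= y)%R -> (exp x <= exp y)%R.
Proof. intros H. destruct (Rle_lt_or_eq_dec _ _ H) as [h|h]. left. apply exp_increasing; auto. rewrite h. lra. Qed.

Section InfiniteProducts.
Variable p : Cplx.
Hypothesis Hp : (Cnorm p < 1)%R.
Let r := Cnorm p.
Lemma r_bounds : (0 <= r < 1)%R.
Proof. split. apply Cnorm_ge0. exact Hp. Qed.

(* A bound on all partial products (x;p)_n, from 1 + t <= exp t. *)
Definition poch_majorant (x : Cplx) : R := exp (Cnorm x / (1 - r)).

Lemma qpoch_upper (x : Cplx) (n : nat) : (Cnorm (qpoch x p n) <= poch_majorant x)%R.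
Proof.
  assert (Hr := r_bounds). assert (Hx := Cnorm_ge0 x).
  assert (H : (Cnorm (qpoch x p n) <= exp (Cnorm x * (1 - r ^ n) / (1 - r)))%R).
  { induction n.
    - simpl. rewrite Cnorm_one. replace (Cnorm x * (1 - 1) / (1 - r))%R with 0%R by (field; lra).
      rewrite exp_0. lra.
    - rewrite qpoch_S, Cnorm_mult.
      assert (H1 : (Cnorm (Cone - x * p ^ n)%C <= 1 + Cnorm x * r ^ n)%R).
      { eapply Rle_trans. apply Cnorm_sub. rewrite Cnorm_one, Cnorm_mult, Cnorm_pow. fold r. lra. }
      assert (H2 : (1 + Cnorm x * r ^ n <= exp (Cnorm x * r ^ n))%R) by apply exp_ineq1_le.
      replace (Cnorm x * (1 - r ^ S n) / (1 - r))%R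
        with (Cnorm x * (1 - r ^ n) / (1 - r) + Cnorm x * r ^ n)%R by (simpl; field; lra).
      rewrite exp_plus. apply Rmult_le_compat; try apply Cnorm_ge0; lra. }
  eapply Rle_trans. apply H. unfold poch_majorant. apply exp_mono_le.
  assert (0 <= r ^ n)%R by (apply pow_le; lra).
  unfold Rdiv. apply Rmult_le_compat_r. left; apply Rinv_0_lt_compat; lra. nra.
Qed.

Lemma poch_majorant_pos (x : Cplx) : (0 < poch_majorant x)%R.
Proof. apply exp_pos. Qed.

(* The infinite product (x;p)_oo exists: consecutive partial products differ
   by at most majorant * |x| r^n. *)
Lemma qpoch_exists (x : Cplx) : exists P, qinf x p P.
Proof.
  assert (Hr := r_bounds).
  destruct (Cauchy_geom (qpoch x p) (poch_majorant x * Cnorm x) r) as [P [HP _]]; auto.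
  { apply Rmult_le_pos. left. apply poch_majorant_pos. apply Cnorm_ge0. }
  { intros n. rewrite qpoch_S.
    replace (qpoch x p n * (Cone - x * p ^ n) - qpoch x p n) with (- (qpoch x p n * (x * p ^ n))) by field.
    rewrite Cnorm_opp, !Cnorm_mult, Cnorm_pow. fold r.
    assert (H := qpoch_upper x n).
    assert (0 <= Cnorm x * r ^ n)%R by (apply Rmult_le_pos; [apply Cnorm_ge0 | apply pow_le; lra]).
    replace (poch_majorant x * Cnorm x * r ^ n)%R with (poch_majorant x * (Cnorm x * r ^ n))%R by ring.
    apply Rmult_le_compat_r; auto. }
  exists P. exact HP.
Qed.

Lemma qpoch_tail_lower (y : Cplx) (n : nat) : (Cnorm y <= (1 - r) / 2)%R -> (1/2 <= Cnorm (qpoch y p n))%R.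
Proof.
  intros Hy. assert (Hr := r_bounds). assert (Hy0 := Cnorm_ge0 y).
  assert (Hsmall : forall m, (0 <= Cnorm y * (1 - r ^ m) / (1 - r) <= 1/2)%R).
  { intros m. assert (0 <= r ^ m <= 1)%R by (split; [apply pow_le; lra | apply pow_le1; lra]).
    assert (A : (Cnorm y / (1 - r) <= 1/2)%R).
    { apply Rmult_le_reg_r with (1 - r)%R. lra. unfold Rdiv. rewrite Rmult_assoc, Rinv_l by lra. lra. }
    assert (B : (0 <= / (1 - r))%R) by (left; apply Rinv_0_lt_compat; lra).
    unfold Rdiv in *. split. apply Rmult_le_pos; nra. nra. }
  assert (H : (1 - Cnorm y * (1 - r ^ n) / (1 - r) <= Cnorm (qpoch y p n))%R).
  { induction n.
    - simpl. rewrite Cnorm_one. replace (Cnorm y * (1 - 1) / (1 - r))%R with 0%R by (field; lra). lra.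
    - rewrite qpoch_S, Cnorm_mult.
      assert (H1 : (1 - Cnorm y * r ^ n <= Cnorm (Cone - y * p ^ n)%C)%R).
      { assert (Hx := Cnorm_sub_rev Cone (y * p ^ n)). rewrite Cnorm_one, Cnorm_mult, Cnorm_pow in Hx.
        exact Hx. }
      assert (0 <= r ^ n <= 1)%R by (split; [apply pow_le; lra | apply pow_le1; lra]).
      replace (1 - Cnorm y * (1 - r ^ S n) / (1 - r))%R
        with ((1 - Cnorm y * (1 - r ^ n) / (1 - r)) - Cnorm y * r ^ n)%R by (simpl; field; lra).
      assert (H0 : (0 <= Cnorm y * r ^ n <= 1/2)%R) by (split; nra).
      specialize (Hsmall n). nra. }
  specialize (Hsmall n). lra.
Qed.

Lemma qpoch_lower (x : Cplx) : (forall n, qpoch x p n <> Czero) ->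
  exists c, (0 < c)%R /\ forall n, (c <= Cnorm (qpoch x p n))%R.
Proof.
  intros Hnz. assert (Hr := r_bounds).
  destruct (geom_small r (Cnorm x) ((1 - r) / 2)%R Hr) as [N0 HN0]. lra.
  specialize (HN0 N0 (le_n _)).
  destruct (finite_min (fun n => Cnorm (qpoch x p n)) N0) as [c [Hc Hc']].
  { intros n. apply Cnorm_pos. auto. }
  exists (Rmin c (Cnorm (qpoch x p N0) / 2)). split.
  { apply Rmin_pos; auto. assert (H := Cnorm_pos _ (Hnz N0)). lra. }
  intros n. destruct (Arith.Compare_dec.le_lt_dec n N0).
  - apply Rle_trans with c. apply Rmin_l. apply Hc'. auto.
  - apply Rle_trans with (Cnorm (qpoch x p N0) / 2)%R. apply Rmin_r.
    replace n with (N0 + (n - N0))%nat by lia. rewrite qpoch_add, Cnorm_mult.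
    assert (H1 : (1/2 <= Cnorm (qpoch (x * p ^ N0)%C p (n - N0)))%R).
    { apply qpoch_tail_lower. rewrite Cnorm_mult, Cnorm_pow. fold r. lra. }
    assert (H2 := Cnorm_ge0 (qpoch x p N0)). nra.
Qed.

Lemma qinf_neq0 (x P : Cplx) : (forall n, qpoch x p n <> Czero) -> qinf x p P -> P <> Czero.
Proof.
  intros Hnz HP. destruct (qpoch_lower x Hnz) as [c [Hc Hc']].
  assert (H := Cconv_norm_lb _ _ _ HP Hc'). intros E. rewrite E, Cnorm_zero in H. lra.
Qed.

Lemma qpoch_shift_lower (x : Cplx) : (forall n, qpoch x p n <> Czero) ->
  exists c, (0 < c)%R /\ forall j n, (c <= Cnorm (qpoch (x * p ^ j)%C p n))%R.
Proof.
  intros Hnz. destruct (qpoch_lower x Hnz) as [c [Hc Hc']].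
  exists (c / poch_majorant x)%R. split. apply Rdiv_lt_0_compat; auto. apply poch_majorant_pos.
  intros j n. assert (E := qpoch_add x p j n).
  apply (f_equal Cnorm) in E. rewrite Cnorm_mult in E.
  assert (H1 := Hc' (j + n)%nat). assert (H2 := qpoch_upper x j). assert (H3 := poch_majorant_pos x).
  assert (H4 := Cnorm_ge0 (qpoch (x * p ^ j)%C p n)). assert (H5 := Cnorm_ge0 (qpoch x p j)).
  apply Rmult_le_reg_r with (poch_majorant x). auto.
  unfold Rdiv. rewrite Rmult_assoc, Rinv_l by lra. rewrite Rmult_1_r.
  rewrite E in H1. nra.
Qed.

Lemma qpoch_shift_neq0 (x : Cplx) (j n : nat) : (forall n, qpoch x p n <> Czero) -> qpoch (x * p ^ j) p n <> Czero.
Proof.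
  intros Hnz E. assert (H := qpoch_add x p j n). rewrite E in H.
  apply (Hnz (j + n)%nat). rewrite H. field.
Qed.

Lemma qpoch_pp_neq0 (k : nat) : qpoch p p k <> Czero.
Proof. apply qpoch_neq0_small; lra. Qed.

End InfiniteProducts.

(** ** The master term

  [master_term p a b g n] is the n-th term of the master series:
    (1 - a p^(2n)) (a;p)_n / (1 - a) * prod_(i<n) (b - a p^(i+1))
      * prod_(i<n) (g - p^i) * (-1)^n p^(tri n) / ((p;p)_n (b;p)_n (apg;p)_n),
  where the very-well-poised factor is written as (1 - a p^(2n)) (ap;p)_(n-1)
  so that no division by 1 - a is needed. *)

Fixpoint tri (n : nat) : nat := match n with O => O | S m => (tri m + m)%nat end.

Definition wp_factor (p a : Cplx) (n : nat) : Cplx :=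
  match n with O => Cone | S m => (Cone - a * p ^ (2 * S m)) * qpoch (a * p) p m end.
Definition b_factor (p a b : Cplx) (n : nat) : Cplx := prodC (fun i => b - a * p ^ (S i)) n.
Definition g_factor (p g : Cplx) (n : nat) : Cplx := prodC (fun i => g - p ^ i) n.
Definition master_den (p a b g : Cplx) (n : nat) : Cplx :=
  qpoch p p n * qpoch b p n * qpoch (a * p * g) p n.
Definition master_term (p a b g : Cplx) (n : nat) : Cplx :=
  wp_factor p a n * b_factor p a b n * g_factor p g n * (- Cone) ^ n * p ^ (tri n)
  / master_den p a b g n.

Lemma b_factor_S (p a b : Cplx) (n : nat) : b_factor p a b (S n) = b_factor p a b n * (b - a * p ^ S n).
Proof. reflexivity. Qed.
Lemma g_factor_S (p g : Cplx) (n : nat) : g_factor p g (S n) = g_factor p g n * (g - p ^ n).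
Proof. reflexivity. Qed.
Lemma b_factor_O (p a b : Cplx) : b_factor p a b O = Cone.
Proof. reflexivity. Qed.
Lemma g_factor_O (p g : Cplx) : g_factor p g O = Cone.
Proof. reflexivity. Qed.
Lemma pow_tri_S (p : Cplx) (n : nat) : p ^ tri (S n) = p ^ tri n * p ^ n.
Proof. simpl tri. apply Cpow_add. Qed.
Lemma neg1S (n : nat) : (- Cone) ^ S n = - (- Cone) ^ n.
Proof. simpl. field. Qed.

Lemma wp_factor_eq (p a : Cplx) (n : nat) : Cone - a <> Czero ->
  wp_factor p a n = (Cone - a * p ^ (2 * n)) * qpoch a p n / (Cone - a).
Proof.
  intros H. destruct n.
  - simpl. field. auto.
  - unfold wp_factor. rewrite qpoch_shift1. field. auto.
Qed.
Lemma b_factor_zero (p a : Cplx) (n : nat) :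
  b_factor p a Czero n = (- Cone) ^ n * a ^ n * p ^ n * p ^ (tri n).
Proof.
  induction n. rewrite b_factor_O. simpl. field.
  rewrite b_factor_S, IHn, pow_tri_S, !Cpow_S. field.
Qed.
Lemma g_factor_zero (p : Cplx) (n : nat) : g_factor p Czero n = (- Cone) ^ n * p ^ (tri n).
Proof.
  induction n. rewrite g_factor_O. simpl. field.
  rewrite g_factor_S, IHn, pow_tri_S, !Cpow_S. field.
Qed.
Lemma b_factor_lin (p a b c x : Cplx) (n : nat) :
  (forall i, b - a * p ^ S i = c * (Cone - x * p ^ i)) -> b_factor p a b n = c ^ n * qpoch x p n.
Proof.
  intros H. induction n. rewrite b_factor_O. simpl. field.
  rewrite b_factor_S, IHn, qpoch_S, H, Cpow_S. field.
Qed.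
Lemma g_factor_lin (p g c x : Cplx) (n : nat) :
  (forall i, g - p ^ i = c * (Cone - x * p ^ i)) -> g_factor p g n = c ^ n * qpoch x p n.
Proof.
  intros H. induction n. rewrite g_factor_O. simpl. field.
  rewrite g_factor_S, IHn, qpoch_S, H, Cpow_S. field.
Qed.

Lemma Cconv_wp_factor (a : nat -> Cplx) (a0 p : Cplx) (n : nat) :
  Cconv a a0 -> Cconv (fun j => wp_factor p (a j) n) (wp_factor p a0 n).
Proof.
  intros H. destruct n. simpl. apply Cconv_const. simpl wp_factor.
  apply Cconv_mult. apply Cconv_sub. apply Cconv_const. apply Cconv_mult. auto. apply Cconv_const.
  apply Cconv_qpoch. apply Cconv_mult. auto. apply Cconv_const.
Qed.

Lemma Cconv_master_term (a b g : nat -> Cplx) (a0 b0 g0 p : Cplx) (n : nat) :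
  Cconv a a0 -> Cconv b b0 -> Cconv g g0 -> master_den p a0 b0 g0 n <> Czero ->
  Cconv (fun j => master_term p (a j) (b j) (g j) n) (master_term p a0 b0 g0 n).
Proof.
  intros Ha Hb Hg Hd. unfold master_term. apply Cconv_div; auto.
  - apply Cconv_mult. 2: apply Cconv_const. apply Cconv_mult. 2: apply Cconv_const.
    apply Cconv_mult. apply Cconv_mult. apply Cconv_wp_factor; auto.
    + unfold b_factor. apply Cconv_prodC with (f := fun j i => b j - a j * p ^ S i). intros i.
      apply Cconv_sub. auto. apply Cconv_mult. auto. apply Cconv_const.
    + unfold g_factor. apply Cconv_prodC with (f := fun j i => g j - p ^ i). intros i.
      apply Cconv_sub. auto. apply Cconv_const.
  - unfold master_den. apply Cconv_mult. apply Cconv_mult. apply Cconv_const. apply Cconv_qpoch; auto.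
    apply Cconv_qpoch. apply Cconv_mult. apply Cconv_mult. auto. apply Cconv_const. auto.
Qed.


Lemma b_factor_shift_b (p a b : Cplx) (m : nat) :
  b_factor p a (b * p) (S m) = p ^ S m * (b - a) * b_factor p a b m.
Proof.
  induction m.
  - rewrite b_factor_S, !b_factor_O. simpl. field.
  - rewrite b_factor_S, IHm, (b_factor_S p a b m). simpl. field.
Qed.
Lemma g_factor_shift_g (p g : Cplx) (m : nat) :
  g_factor p (g * p) (S m) = (g * p - Cone) * p ^ m * g_factor p g m.
Proof.
  induction m.
  - rewrite g_factor_S, !g_factor_O. simpl. field.
  - rewrite g_factor_S, IHm, (g_factor_S p g m). simpl. field.
Qed.
Lemma b_factor_shift_a (p a : Cplx) (n : nat) : b_factor p (a * p) Czero n = p ^ n * b_factor p a Czero n.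
Proof.
  induction n.
  - rewrite !b_factor_O. simpl. field.
  - rewrite !b_factor_S, IHn. simpl. field.
Qed.
Lemma qpoch_shift_div (b p : Cplx) (n : nat) :
  Cone - b <> Czero -> qpoch (b * p) p n = qpoch b p (S n) / (Cone - b).
Proof. intros H. rewrite qpoch_shift1. field. auto. Qed.
Lemma Cpow_double_S (p : Cplx) (m : nat) : p ^ (2 * S m) = (p * p ^ m) * (p * p ^ m).
Proof. replace (2 * S m)%nat with (S m + S m)%nat by lia. rewrite Cpow_add. reflexivity. Qed.

Definition tele_b (p a b g : Cplx) (n : nat) : Cplx := match n with
  | O => Czero
  | S m => b * (Cone - b) * qpoch (a * p) p m * b_factor p a b m * g_factor p g (S m)
           * (- Cone) ^ S m * p ^ tri (S m) / (qpoch p p m * qpoch b p (S m) * qpoch (a * p * g) p m) end.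

Lemma contiguous_b (p a b g : Cplx) (n : nat) :
  (forall k, qpoch p p k <> Czero) -> (forall k, qpoch b p k <> Czero) ->
  (forall k, qpoch (a * p * g) p k <> Czero) ->
  (Cone - b) * master_term p a b g n - (Cone - b * g) * master_term p a (b * p) g n
    = tele_b p a b g n - tele_b p a b g (S n).
Proof.
  intros Hqp Hqb Hqg.
  assert (Hb1 := qpoch_first_factor b p Hqb).
  destruct n as [|m].
  - unfold master_term, tele_b, master_den, wp_factor.
    rewrite !b_factor_O, !g_factor_O, !qpoch_O, g_factor_S, g_factor_O, !qpoch_S, !qpoch_O.
    simpl tri. simpl Cpow. field. split. exact Hb1. exact Cone_neq0.
  - assert (N1 := Hqp (S m)). assert (N2 := Hqb (S (S m))). assert (N3 := Hqg (S m)).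
    assert (N4 := Hqp m). assert (N5 := Hqb (S m)). assert (N6 := Hqg m).
    unfold master_term, tele_b, master_den, wp_factor.
    rewrite b_factor_shift_b, (qpoch_shift_div b p (S m) Hb1), (b_factor_S p a b m), (g_factor_S p g (S m)),
      (neg1S (S m)), (pow_tri_S p (S m)).
    rewrite (qpoch_S b p (S m)) in *. rewrite (qpoch_S p p m) in *. rewrite (qpoch_S (a*p) p m).
    rewrite (qpoch_S (a*p*g) p m) in *. rewrite Cpow_double_S. rewrite !Cpow_S in *.
    assert (M1 := Cmul_neq0_l _ _ N1). assert (M2 := Cmul_neq0_r _ _ N1).
    assert (M3 := Cmul_neq0_l _ _ N2). assert (M4 := Cmul_neq0_r _ _ N2).
    assert (M5 := Cmul_neq0_l _ _ N3). assert (M6 := Cmul_neq0_r _ _ N3).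
    field. repeat split; assumption.
Qed.

(* Shift g -> gp at b = 0:  (1 - apg) T(a,0,g) - T(a,0,gp) telescopes.
   (The trivial factor (0;p)_(m+1) keeps the shape used by [shape_bound].) *)
Definition tele_g (p a g : Cplx) (n : nat) : Cplx := match n with
  | O => Czero
  | S m => (Cone - a * p * g) * g * qpoch (a * p) p m * b_factor p a Czero (S m) * g_factor p g m
           * (- Cone) ^ S m * p ^ tri (S m) / (qpoch p p m * qpoch Czero p (S m) * qpoch (a * p * g) p (S m)) end.

Lemma contiguous_g (p a g : Cplx) (n : nat) :
  (forall k, qpoch p p k <> Czero) -> (forall k, qpoch (a * p * g) p k <> Czero) ->
  (Cone - a * p * g) * master_term p a Czero g n - master_term p a Czero (g * p) n
    = tele_g p a g n - tele_g p a g (S n).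
Proof.
  intros Hqp Hqg.
  assert (Hg1 := qpoch_first_factor (a * p * g) p Hqg).
  assert (Eg : forall k, qpoch (a * p * (g * p)) p k = qpoch (a * p * g) p (S k) / (Cone - a * p * g)).
  { intros k. rewrite <- qpoch_shift_div by auto. apply qpoch_ext. field. }
  unfold master_term, master_den. rewrite !Eg, !qpoch_zero.
  destruct n as [|m].
  - unfold tele_g, wp_factor.
    rewrite ?b_factor_S, ?g_factor_S, ?b_factor_O, ?g_factor_O, ?qpoch_S, ?qpoch_O, ?qpoch_zero.
    simpl tri. simpl Cpow. field. repeat split; try exact Hg1; try exact Cone_neq0.
  - assert (N1 := Hqp (S m)). assert (N2 := Hqg (S (S m))). assert (N3 := Hqg (S m)). assert (N4 := Hqp m).
    unfold tele_g, wp_factor. rewrite !qpoch_zero.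
    rewrite g_factor_shift_g, (g_factor_S p g m), (b_factor_S p a Czero (S m)), (neg1S (S m)), (pow_tri_S p (S m)).
    rewrite (qpoch_S (a*p*g) p (S m)) in *. rewrite (qpoch_S p p m) in *. rewrite (qpoch_S (a*p) p m).
    rewrite Cpow_double_S. rewrite !Cpow_S in *.
    assert (M1 := Cmul_neq0_l _ _ N1). assert (M2 := Cmul_neq0_r _ _ N1).
    assert (M3 := Cmul_neq0_l _ _ N2). assert (M4 := Cmul_neq0_r _ _ N2).
    field. repeat split; try assumption; try exact Cone_neq0.
Qed.

Definition tele_a (p a : Cplx) (n : nat) : Cplx := match n with
  | O => Czero
  | S m => Cone * qpoch (a * p) p m * b_factor p a Czero (S m) * g_factor p Czero (S m)
           * (- Cone) ^ S m * p ^ tri (S m) / qpoch p p m end.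

Lemma contiguous_a (p a : Cplx) (n : nat) :
  (forall k, qpoch p p k <> Czero) ->
  master_term p a Czero Czero n - (Cone - a * p) * master_term p (a * p) Czero Czero n
    = tele_a p a n - tele_a p a (S n).
Proof.
  intros Hqp.
  unfold master_term, master_den. rewrite !qpoch_times_zero, !qpoch_zero.
  destruct n as [|[|m]].
  - unfold tele_a, wp_factor. rewrite ?b_factor_S, ?g_factor_S, ?b_factor_O, ?g_factor_O, ?qpoch_S, ?qpoch_O.
    simpl tri. simpl Cpow. field. repeat split; try exact Cone_neq0.
  - assert (N1 := qpoch_first_factor p p Hqp).
    unfold tele_a, wp_factor. rewrite ?b_factor_S, ?g_factor_S, ?b_factor_O, ?g_factor_O, ?qpoch_S, ?qpoch_O.
    simpl tri. simpl Cpow.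
    field. repeat split; try exact Cone_neq0; exact N1.
  - assert (N1 := Hqp (S (S m))). assert (N2 := Hqp (S m)).
    unfold tele_a, wp_factor.
    rewrite b_factor_shift_a.
    rewrite (b_factor_S p a Czero (S (S m))), (g_factor_S p Czero (S (S m))), (neg1S (S (S m))),
      (pow_tri_S p (S (S m))).
    rewrite (qpoch_S (a*p) p (S m)). rewrite (qpoch_shift1 (a*p) p m). rewrite (qpoch_S (a*p*p) p m).
    rewrite (qpoch_S p p (S m)) in *.
    rewrite !Cpow_double_S. rewrite !Cpow_S in *.
    assert (M1 := Cmul_neq0_l _ _ N1). assert (M2 := Cmul_neq0_r _ _ N1).
    field. repeat split; try assumption; try exact Cone_neq0.
Qed.
(** The numerator factors grow at most geometrically while p^(tri n) decays
  like a Gaussian, so the terms are O(2^-n). *)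

Lemma wp_factor_bound (p a : Cplx) (n : nat) :
  (Cnorm p <= 1)%R -> (Cnorm (wp_factor p a n) <= (1 + Cnorm a) ^ n)%R.
Proof.
  intros H. destruct n. change (wp_factor p a 0) with Cone. rewrite Cnorm_one. simpl. lra.
  unfold wp_factor. rewrite Cnorm_mult. simpl pow.
  apply Rmult_le_compat; try apply Cnorm_ge0.
  - rewrite <- Cnorm_one. apply factor_bound; auto.
  - eapply Rle_trans. apply qpoch_bound; auto. apply pow_incr. split. assert (H0 := Cnorm_ge0 (a * p)). lra.
    rewrite Cnorm_mult. assert (H0 := Cnorm_ge0 a). assert (H1 := Cnorm_ge0 p). nra.
Qed.

Lemma b_factor_bound (p a b : Cplx) (n : nat) :
  (Cnorm p <= 1)%R -> (Cnorm (b_factor p a b n) <= (Cnorm b + Cnorm a) ^ n)%R.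
Proof. intros H. apply prodC_norm_bound. intros i. apply factor_bound; auto. Qed.

Lemma g_factor_bound (p g : Cplx) (n : nat) :
  (Cnorm p <= 1)%R -> (Cnorm (g_factor p g n) <= (Cnorm g + 1) ^ n)%R.
Proof.
  intros H. apply prodC_norm_bound. intros i. eapply Rle_trans. apply Cnorm_sub.
  assert (H1 := norm_pow_le1 p i H). lra.
Qed.

Lemma tri_geom (K r : R) : (0 <= K)%R -> (0 <= r < 1)%R ->
  exists C0, (0 <= C0)%R /\ forall n, (K ^ n * r ^ (tri n) <= C0 * (1/2) ^ n)%R.
Proof.
  intros HK Hr.
  destruct (geom_small r (2 * K) 1%R Hr) as [N HN]. lra.
  set (h := fun n => ((2 * K) ^ n * r ^ tri n)%R).
  assert (HS : forall n, h (S n) = (h n * (2 * K * r ^ n))%R).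
  { intros n. unfold h. simpl. rewrite pow_add. ring. }
  assert (Hh0 : forall n, (0 <= h n)%R). { intros n. unfold h. apply Rmult_le_pos; apply pow_le; lra. }
  destruct (finite_max h N) as [C0 [HC0 HC0']].
  (* beyond N the ratio h (S n) / h n is below 1, so h stays below its early maximum *)
  assert (Hall : forall n, (h n <= C0)%R).
  { induction n. apply HC0'. lia.
    destruct (Arith.Compare_dec.le_lt_dec (S n) N). apply HC0'. auto.
    rewrite HS. specialize (HN n ltac:(lia)). specialize (Hh0 n).
    assert (0 <= 2 * K * r ^ n)%R by (apply Rmult_le_pos; [lra | apply pow_le; lra]). nra. }
  exists C0. split; auto. intros n. specialize (Hall n). unfold h in Hall.
  rewrite Rpow_mult_distr in Hall.
  assert (E : (2 ^ n * (1/2) ^ n = 1)%R).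
  { rewrite <- Rpow_mult_distr. replace (2 * (1/2))%R with 1%R by field. apply pow1. }
  replace (K ^ n * r ^ tri n)%R with (2 ^ n * K ^ n * r ^ tri n * (1/2) ^ n)%R.
  - apply Rmult_le_compat_r. apply pow_le; lra. lra.
  - transitivity (K ^ n * r ^ tri n * (2 ^ n * (1/2) ^ n))%R. ring. rewrite E. ring.
Qed.

(* Generic estimate for expressions shaped like master terms and telescopers. *)
Lemma shape_bound (c X1 X2 X3 s t D : Cplx) (K1 K2 K3 d r : R) (n : nat) :
  (0 <= K1)%R -> (0 <= K2)%R -> (0 <= K3)%R -> (0 < d)%R ->
  (Cnorm X1 <= K1 ^ n)%R -> (Cnorm X2 <= K2 ^ n)%R -> (Cnorm X3 <= K3 ^ n)%R ->
  Cnorm s = 1%R -> (Cnorm t <= r ^ tri n)%R -> (d <= Cnorm D)%R ->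
  (Cnorm (c * X1 * X2 * X3 * s * t / D)%C <= Cnorm c / d * ((K1 * K2 * K3) ^ n * r ^ tri n))%R.
Proof.
  intros HK1 HK2 HK3 Hd H1 H2 H3 Hs Ht HD.
  assert (HDn : D <> Czero). { intros E. rewrite E, Cnorm_zero in HD. lra. }
  unfold Cdiv. rewrite !Cnorm_mult, Cnorm_inv by auto. rewrite Hs, !Rpow_mult_distr.
  assert (P1 := Cnorm_ge0 X1). assert (P2 := Cnorm_ge0 X2). assert (P3 := Cnorm_ge0 X3).
  assert (Pt := Cnorm_ge0 t). assert (Pc := Cnorm_ge0 c).
  assert (HDi : (/ Cnorm D <= / d)%R) by (apply Rinv_le_contravar; lra).
  assert (HDi0 : (0 <= / Cnorm D)%R) by (left; apply Rinv_0_lt_compat; lra).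
  assert (A : (Cnorm X1 * Cnorm X2 * Cnorm X3 * Cnorm t <= K1 ^ n * K2 ^ n * K3 ^ n * r ^ tri n)%R).
  { apply Rmult_le_compat. repeat apply Rmult_le_pos; auto. auto.
    apply Rmult_le_compat. apply Rmult_le_pos; auto. auto. apply Rmult_le_compat; auto. auto. auto. }
  assert (A0 : (0 <= Cnorm X1 * Cnorm X2 * Cnorm X3 * Cnorm t)%R) by (repeat apply Rmult_le_pos; auto).
  replace (Cnorm c * Cnorm X1 * Cnorm X2 * Cnorm X3 * 1 * Cnorm t * / Cnorm D)%R
    with (Cnorm c * (Cnorm X1 * Cnorm X2 * Cnorm X3 * Cnorm t) * / Cnorm D)%R by ring.
  replace (Cnorm c / d * (K1 ^ n * K2 ^ n * K3 ^ n * r ^ tri n))%R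
    with (Cnorm c * (K1 ^ n * K2 ^ n * K3 ^ n * r ^ tri n) * / d)%R by (unfold Rdiv; ring).
  apply Rmult_le_compat; auto. apply Rmult_le_pos; auto. apply Rmult_le_compat_l; auto.
Qed.

Lemma norm_prod3_lb (D1 D2 D3 : Cplx) (d1 d2 d3 : R) : (0 < d1)%R -> (0 < d2)%R -> (0 < d3)%R ->
  (d1 <= Cnorm D1)%R -> (d2 <= Cnorm D2)%R -> (d3 <= Cnorm D3)%R ->
  (d1 * d2 * d3 <= Cnorm (D1 * D2 * D3)%C)%R.
Proof.
  intros. rewrite !Cnorm_mult. apply Rmult_le_compat; try lra. apply Rmult_le_pos; lra.
  apply Rmult_le_compat; lra.
Qed.


Lemma tri_to_zero (u : nat -> Cplx) (M K r : R) : (0 <= M)%R -> (0 <= K)%R -> (0 <= r < 1)%R ->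
  u O = Czero -> (forall m, (Cnorm (u (S m)) <= M * (K ^ S m * r ^ tri (S m)))%R) -> Cconv u Czero.
Proof.
  intros HM HK Hr H0 H. destruct (tri_geom K r HK Hr) as [C0 [HC0 HC0']].
  apply Cconv_geom with (C0 := (M * C0)%R) (th := (1/2)%R). lra.
  intros n. replace (u n - Czero) with (u n) by field. destruct n as [|m].
  - rewrite H0, Cnorm_zero. simpl. nra.
  - eapply Rle_trans. apply H. rewrite (Rmult_assoc M C0). apply Rmult_le_compat_l; auto.
Qed.

Lemma qpoch_bound_S (x p : Cplx) (m : nat) :
  (Cnorm p <= 1)%R -> (Cnorm (qpoch x p m) <= (1 + Cnorm x) ^ S m)%R.
Proof.
  intros H. eapply Rle_trans. apply qpoch_bound; auto. apply Rle_pow; auto. assert (H0 := Cnorm_ge0 x). lra.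
Qed.

Section Estimates.
Variable p : Cplx.
Hypothesis Hp : (Cnorm p < 1)%R.

Lemma norm_p_le1 : (Cnorm p <= 1)%R.
Proof. lra. Qed.
Lemma norm_p_bounds : (0 <= Cnorm p < 1)%R.
Proof. split. apply Cnorm_ge0. exact Hp. Qed.

Lemma master_term_geom (Ra Rb Rg cb cg : R) :
  (0 <= Ra)%R -> (0 <= Rb)%R -> (0 <= Rg)%R -> (0 < cb)%R -> (0 < cg)%R ->
  exists C0, (0 <= C0)%R /\ forall a b g, (Cnorm a <= Ra)%R -> (Cnorm b <= Rb)%R -> (Cnorm g <= Rg)%R ->
    (forall n, (cb <= Cnorm (qpoch b p n))%R) -> (forall n, (cg <= Cnorm (qpoch (a * p * g)%C p n))%R) ->
    forall n, (Cnorm (master_term p a b g n) <= C0 * (1/2) ^ n)%R.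
Proof.
  intros HRa HRb HRg Hcb Hcg.
  destruct (qpoch_lower p Hp p (qpoch_pp_neq0 p Hp)) as [c1 [Hc1 Hc1']].
  set (K := ((1 + Ra) * (Rb + Ra) * (Rg + 1))%R).
  assert (HK : (0 <= K)%R) by (unfold K; repeat apply Rmult_le_pos; lra).
  destruct (tri_geom K (Cnorm p) HK norm_p_bounds) as [C0 [HC0 HC0']].
  assert (Hd : (0 < c1 * cb * cg)%R) by (repeat apply Rmult_lt_0_compat; auto).
  exists (Cnorm Cone / (c1 * cb * cg) * C0)%R. split.
  { rewrite Cnorm_one. apply Rmult_le_pos; auto. left. apply Rdiv_lt_0_compat; lra. }
  intros a b g Ha Hb Hg Hb' Hg' n.
  assert (Ha0 := Cnorm_ge0 a). assert (Hb0 := Cnorm_ge0 b). assert (Hg0 := Cnorm_ge0 g).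
  replace (master_term p a b g n) with (Cone * wp_factor p a n * b_factor p a b n * g_factor p g n
    * (- Cone) ^ n * p ^ (tri n) / master_den p a b g n) by (unfold master_term, Cdiv; ring).
  eapply Rle_trans.
  apply shape_bound with (K1 := (1 + Ra)%R) (K2 := (Rb + Ra)%R) (K3 := (Rg + 1)%R) (r := Cnorm p).
  - lra.
  - lra.
  - lra.
  - exact Hd.
  - eapply Rle_trans. apply wp_factor_bound, norm_p_le1. apply pow_incr. lra.
  - eapply Rle_trans. apply b_factor_bound, norm_p_le1. apply pow_incr. lra.
  - eapply Rle_trans. apply g_factor_bound, norm_p_le1. apply pow_incr. lra.
  - apply Cnorm_neg1_pow.
  - rewrite Cnorm_pow. lra.
  - apply norm_prod3_lb; auto.
  - rewrite (Rmult_assoc (Cnorm Cone / (c1 * cb * cg))). apply Rmult_le_compat_l.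
    + rewrite Cnorm_one. left. apply Rdiv_lt_0_compat; lra.
    + apply HC0'.
Qed.

(* The telescopers tend to 0 (the same Gaussian decay as the terms). *)
Lemma tele_b_vanishes (a b g : Cplx) :
  (forall k, qpoch b p k <> Czero) -> (forall k, qpoch (a * p * g) p k <> Czero) ->
  Cconv (tele_b p a b g) Czero.
Proof.
  intros Hb Hg.
  destruct (qpoch_lower p Hp p (qpoch_pp_neq0 p Hp)) as [c1 [Hc1 Hc1']].
  destruct (qpoch_lower p Hp b Hb) as [c2 [Hc2 Hc2']].
  destruct (qpoch_lower p Hp (a * p * g) Hg) as [c3 [Hc3 Hc3']].
  apply tri_to_zero with (M := (Cnorm (b * (Cone - b))%C / (c1 * c2 * c3))%R)
    (K := ((1 + Cnorm (a * p)%C) * (1 + (Cnorm b + Cnorm a)) * (Cnorm g + 1))%R) (r := Cnorm p).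
  - apply Rmult_le_pos. apply Cnorm_ge0. left. apply Rinv_0_lt_compat. repeat apply Rmult_lt_0_compat; auto.
  - assert (H1 := Cnorm_ge0 (a*p)). assert (H2 := Cnorm_ge0 b).
    assert (H3 := Cnorm_ge0 a). assert (H4 := Cnorm_ge0 g).
    repeat apply Rmult_le_pos; lra.
  - apply norm_p_bounds.
  - reflexivity.
  - intros m. unfold tele_b.
    assert (H2 := Cnorm_ge0 b). assert (H3 := Cnorm_ge0 a). assert (H4 := Cnorm_ge0 g).
    assert (H1 := Cnorm_ge0 (a*p)).
    apply shape_bound.
    + lra.
    + lra.
    + lra.
    + repeat apply Rmult_lt_0_compat; auto.
    + apply qpoch_bound_S. apply norm_p_le1.
    + eapply Rle_trans. apply b_factor_bound, norm_p_le1.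
      eapply Rle_trans. apply pow_incr with (y := (1 + (Cnorm b + Cnorm a))%R). lra. apply Rle_pow; [lra | lia].
    + apply g_factor_bound. apply norm_p_le1.
    + apply Cnorm_neg1_pow.
    + rewrite Cnorm_pow. lra.
    + apply norm_prod3_lb; auto.
Qed.

Lemma tele_g_vanishes (a g : Cplx) : (forall k, qpoch (a * p * g) p k <> Czero) -> Cconv (tele_g p a g) Czero.
Proof.
  intros Hg.
  destruct (qpoch_lower p Hp p (qpoch_pp_neq0 p Hp)) as [c1 [Hc1 Hc1']].
  destruct (qpoch_lower p Hp (a * p * g) Hg) as [c3 [Hc3 Hc3']].
  assert (H2 := Cnorm_ge0 Czero). assert (H3 := Cnorm_ge0 a).
  assert (H4 := Cnorm_ge0 g). assert (H1 := Cnorm_ge0 (a*p)).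
  apply tri_to_zero with (M := (Cnorm ((Cone - a * p * g) * g)%C / (c1 * 1 * c3))%R)
    (K := ((1 + Cnorm (a * p)%C) * (Cnorm Czero + Cnorm a) * (Cnorm g + 1))%R) (r := Cnorm p).
  - apply Rmult_le_pos. apply Cnorm_ge0. left. apply Rinv_0_lt_compat. repeat apply Rmult_lt_0_compat; lra.
  - repeat apply Rmult_le_pos; lra.
  - apply norm_p_bounds.
  - reflexivity.
  - intros m. unfold tele_g. apply shape_bound.
    + lra.
    + lra.
    + lra.
    + repeat apply Rmult_lt_0_compat; lra.
    + apply qpoch_bound_S. apply norm_p_le1.
    + apply b_factor_bound. apply norm_p_le1.
    + eapply Rle_trans. apply g_factor_bound. apply norm_p_le1. apply Rle_pow; [lra | lia].
    + apply Cnorm_neg1_pow.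
    + rewrite Cnorm_pow. lra.
    + apply norm_prod3_lb; auto; try lra. rewrite qpoch_zero, Cnorm_one. lra.
Qed.

Lemma tele_a_vanishes (a : Cplx) : Cconv (tele_a p a) Czero.
Proof.
  destruct (qpoch_lower p Hp p (qpoch_pp_neq0 p Hp)) as [c1 [Hc1 Hc1']].
  assert (H2 := Cnorm_ge0 Czero). assert (H3 := Cnorm_ge0 a). assert (H1 := Cnorm_ge0 (a*p)).
  apply tri_to_zero with (M := (Cnorm Cone / c1)%R)
    (K := ((1 + Cnorm (a * p)%C) * (Cnorm Czero + Cnorm a) * (Cnorm Czero + 1))%R) (r := Cnorm p).
  - apply Rmult_le_pos. apply Cnorm_ge0. left. apply Rinv_0_lt_compat. lra.
  - repeat apply Rmult_le_pos; lra.
  - apply norm_p_bounds.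
  - reflexivity.
  - intros m. unfold tele_a. apply shape_bound.
    + lra.
    + lra.
    + lra.
    + lra.
    + apply qpoch_bound_S. apply norm_p_le1.
    + apply b_factor_bound. apply norm_p_le1.
    + apply g_factor_bound. apply norm_p_le1.
    + apply Cnorm_neg1_pow.
    + rewrite Cnorm_pow. lra.
    + auto.
Qed.
End Estimates.

(** ** The iteration principle *)

(* Iterating a contiguous relation. *)
Lemma contiguous_iteration (F G : nat -> nat -> Cplx) (gl u v : nat -> Cplx) (L PU PV : Cplx) (C0 : R) :
  (0 <= C0)%R ->
  (forall j n, (Cnorm (F j n) <= C0 * (1/2) ^ n)%R) ->
  (forall n, Cconv (fun j => F j n) (gl n)) ->
  Cseries gl L ->
  (forall j n, u j * F j n - v j * F (S j) n = G j n - G j (S n)) ->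
  (forall j, G j O = Czero) -> (forall j, Cconv (G j) Czero) ->
  Cconv (prodC u) PU -> Cconv (prodC v) PV -> PU <> Czero ->
  Cseries (F O) (PV * L / PU).
Proof.
  intros HC Hb Hpt Hgl Hrel HG0 HGc HU HV HPU.
  assert (Hser : forall j, Cseries (F j) (csum (F j))) by (intros j; apply csum_geom with C0; auto).
  assert (Hsum : forall j, u j * csum (F j) = v j * csum (F (S j))).
  { intros j. apply (Cseries_telescoping_relation (F j) (F (S j)) (G j)); auto. }
  assert (Hit : forall j, prodC u j * csum (F O) = prodC v j * csum (F j)).
  { induction j. simpl. field. rewrite !prodC_S.
    transitivity (prodC u j * csum (F O) * u j). field. rewrite IHj.
    transitivity (prodC v j * (u j * csum (F j))). field. rewrite Hsum. field. }
  destruct (Tannery F gl C0 (1/2) (fun j => csum (F j)) HC ltac:(lra) Hpt Hb Hser) as [L' [HL' HLc]].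
  rewrite <- (Cseries_unique _ _ _ HL' Hgl).
  (* both sides of [Hit] converge, to PU * sum F_0 and to PV * L *)
  assert (C1 : Cconv (fun j => prodC u j * csum (F O)) (PU * csum (F O))).
  { apply Cconv_mult; auto. apply Cconv_const. }
  assert (C2 : Cconv (fun j => prodC u j * csum (F O)) (PV * L')).
  { apply Cconv_ext with (fun j => prodC v j * csum (F j)). intros j. auto. apply Cconv_mult; auto. }
  assert (E := Cconv_unique _ _ _ C1 C2).
  replace (PV * L' / PU) with (csum (F O)). apply Hser.
  rewrite <- E. field. auto.
Qed.

Lemma Cconv_prodC_one : Cconv (prodC (fun _ => Cone)) Cone.
Proof. apply Cconv_ext with (fun _ => Cone). intros n. rewrite prodC_one. reflexivity. apply Cconv_const. Qed.

Lemma Cpow_S_r (x p : Cplx) (j : nat) : x * p ^ S j = x * p ^ j * p.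
Proof. rewrite Cpow_S. field. Qed.

(** ** The master identity *)

Section MasterIdentity.
Variable p : Cplx.
Hypothesis Hp : (Cnorm p < 1)%R.

Lemma norm_mul_pow_le (x : Cplx) (j : nat) : (Cnorm (x * p ^ j)%C <= Cnorm x)%R.
Proof.
  rewrite Cnorm_mult. assert (H := norm_pow_le1 p j (norm_p_le1 p Hp)). assert (H0 := Cnorm_ge0 x). nra.
Qed.

Lemma Cconv_mul_pow_zero (x : Cplx) : Cconv (fun j => x * p ^ j) Czero.
Proof.
  replace Czero with (x * Czero) by field. apply Cconv_mult. apply Cconv_const. apply Cconv_pow_zero; auto.
Qed.

(* With b = g = 0 the denominators reduce to (p;p)_n. *)
Lemma master_den_nonzero (a : Cplx) (n : nat) : master_den p a Czero Czero n <> Czero.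
Proof.
  unfold master_den. rewrite qpoch_zero, qpoch_times_zero.
  apply Cmul_neq0. apply Cmul_neq0. apply qpoch_pp_neq0; auto. all: exact Cone_neq0.
Qed.

(* Case b = g = 0:  sum T(a,0,0) = (ap;p)_oo.  Shift a -> ap; at a = 0 the
   series reduces to its first term 1. *)
Lemma master_sum_b0_g0 (a P : Cplx) : qinf (a * p) p P -> Cseries (master_term p a Czero Czero) P.
Proof.
  intros HP.
  destruct (master_term_geom p Hp (Cnorm a) 0 0 1 1) as [C0 [HC0 Hbound]]; try lra. apply Cnorm_ge0.
  assert (Hlim : Cseries (master_term p Czero Czero Czero) Cone).
  { replace Cone with (Csum (master_term p Czero Czero Czero) 1).
    - apply Cseries_finite. intros [|n] Hn. lia.
      unfold master_term. rewrite b_factor_S. unfold Cdiv.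
      replace (Czero - Czero * p ^ S n) with Czero by field. ring.
    - rewrite Csum_S, Csum_O. unfold master_term, master_den, wp_factor.
      rewrite b_factor_O, g_factor_O, !qpoch_O. simpl tri. rewrite !Cpow_O. field. exact Cone_neq0. }
  replace P with (P * Cone / Cone) by (field; exact Cone_neq0).
  apply Cseries_ext with (f := master_term p (a * p ^ 0) Czero Czero).
  { intros n. f_equal. simpl. field. }
  apply (contiguous_iteration (fun j => master_term p (a * p ^ j) Czero Czero)
    (fun j => tele_a p (a * p ^ j)) (master_term p Czero Czero Czero)
    (fun _ => Cone) (fun i => Cone - a * p * p ^ i) Cone Cone P C0 HC0).
  - intros j n. apply Hbound.
    + apply norm_mul_pow_le.
    + rewrite Cnorm_zero. lra.
    + rewrite Cnorm_zero. lra.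
    + intros k. rewrite qpoch_zero, Cnorm_one. lra.
    + intros k. rewrite qpoch_times_zero, Cnorm_one. lra.
  - intros n. apply Cconv_master_term; try apply Cconv_const.
    apply Cconv_mul_pow_zero. apply master_den_nonzero.
  - exact Hlim.
  - intros j n. rewrite Cpow_S_r. replace (Cone - a * p * p ^ j) with (Cone - a * p ^ j * p) by field.
    rewrite <- contiguous_a. field. apply qpoch_pp_neq0; auto.
  - reflexivity.
  - intros j. apply tele_a_vanishes; auto.
  - exact Cconv_prodC_one.
  - apply qinf_prodC. exact HP.
  - exact Cone_neq0.
Qed.

(* Case b = 0:  sum T(a,0,g) = (ap;p)_oo / (apg;p)_oo.  Shift g -> gp; as
   g p^j -> 0 the series tends to the case g = 0. *)
Lemma master_sum_b0 (a g P1 P2 : Cplx) : (forall k, qpoch (a * p * g) p k <> Czero) ->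
  qinf (a * p) p P1 -> qinf (a * p * g) p P2 -> Cseries (master_term p a Czero g) (P1 / P2).
Proof.
  intros Hg HP1 HP2.
  assert (Hshift : forall j k, qpoch (a * p * (g * p ^ j)) p k = qpoch (a * p * g * p ^ j) p k)
    by (intros; apply qpoch_ext; field).
  destruct (qpoch_shift_lower p Hp (a * p * g) Hg) as [cg [Hcg Hcg']].
  destruct (master_term_geom p Hp (Cnorm a) 0 (Cnorm g) 1 cg) as [C0 [HC0 Hbound]];
    try lra; try apply Cnorm_ge0.
  assert (HP2n : P2 <> Czero) by (apply (qinf_neq0 p Hp (a * p * g)); auto).
  replace (P1 / P2) with (Cone * P1 / P2) by (field; auto).
  apply Cseries_ext with (f := master_term p a Czero (g * p ^ 0)).
  { intros n. f_equal. simpl. field. }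
  apply (contiguous_iteration (fun j => master_term p a Czero (g * p ^ j))
    (fun j => tele_g p a (g * p ^ j)) (master_term p a Czero Czero)
    (fun i => Cone - a * p * g * p ^ i) (fun _ => Cone) P1 P2 Cone C0 HC0).
  - intros j n. apply Hbound.
    + lra.
    + rewrite Cnorm_zero. lra.
    + apply norm_mul_pow_le.
    + intros k. rewrite qpoch_zero, Cnorm_one. lra.
    + intros k. rewrite Hshift. apply Hcg'.
  - intros n. apply Cconv_master_term; try apply Cconv_const.
    apply Cconv_mul_pow_zero. apply master_den_nonzero.
  - apply master_sum_b0_g0; auto.
  - intros j n. rewrite Cpow_S_r.
    replace (Cone - a * p * g * p ^ j) with (Cone - a * p * (g * p ^ j)) by field.
    rewrite <- contiguous_g.
    + field.
    + apply qpoch_pp_neq0; auto.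
    + intros k. rewrite Hshift. apply qpoch_shift_neq0; auto.
  - reflexivity.
  - intros j. apply tele_g_vanishes; auto. intros k. rewrite Hshift. apply qpoch_shift_neq0; auto.
  - apply qinf_prodC. exact HP2.
  - exact Cconv_prodC_one.
  - exact HP2n.
Qed.

(* The master identity:  sum T(a,b,g) = (ap, bg; p)_oo / (b, apg; p)_oo.
   Shift b -> bp; as b p^j -> 0 the series tends to the case b = 0. *)
Lemma master_sum (a b g P1 P2 P3 P4 : Cplx) :
  (forall k, qpoch b p k <> Czero) -> (forall k, qpoch (a * p * g) p k <> Czero) ->
  qinf (a * p) p P1 -> qinf (b * g) p P2 -> qinf b p P3 -> qinf (a * p * g) p P4 ->
  Cseries (master_term p a b g) (P1 * P2 / (P3 * P4)).
Proof.
  intros Hb Hg HP1 HP2 HP3 HP4.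
  destruct (qpoch_shift_lower p Hp b Hb) as [cb [Hcb Hcb']].
  destruct (qpoch_lower p Hp (a * p * g) Hg) as [cg [Hcg Hcg']].
  destruct (master_term_geom p Hp (Cnorm a) (Cnorm b) (Cnorm g) cb cg) as [C0 [HC0 Hbound]];
    try lra; try apply Cnorm_ge0; auto.
  assert (HP3n : P3 <> Czero) by (apply (qinf_neq0 p Hp b); auto).
  assert (HP4n : P4 <> Czero) by (apply (qinf_neq0 p Hp (a * p * g)); auto).
  replace (P1 * P2 / (P3 * P4)) with (P2 * (P1 / P4) / P3) by (field; auto).
  apply Cseries_ext with (f := master_term p a (b * p ^ 0) g).
  { intros n. f_equal. simpl. field. }
  apply (contiguous_iteration (fun j => master_term p a (b * p ^ j) g)
    (fun j => tele_b p a (b * p ^ j) g) (master_term p a Czero g)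
    (fun i => Cone - b * p ^ i) (fun i => Cone - b * g * p ^ i) (P1 / P4) P3 P2 C0 HC0).
  - intros j n. apply Hbound; auto; try lra. apply norm_mul_pow_le.
  - intros n. apply Cconv_master_term; try apply Cconv_const.
    + apply Cconv_mul_pow_zero.
    + unfold master_den. rewrite qpoch_zero. apply Cmul_neq0; auto.
      apply Cmul_neq0. apply qpoch_pp_neq0; auto. exact Cone_neq0.
  - apply master_sum_b0; auto.
  - intros j n. rewrite Cpow_S_r. replace (Cone - b * g * p ^ j) with (Cone - b * p ^ j * g) by field.
    apply contiguous_b.
    + apply qpoch_pp_neq0; auto.
    + intros k. apply qpoch_shift_neq0; auto.
    + auto.
  - reflexivity.
  - intros j. apply tele_b_vanishes; auto. intros k. apply qpoch_shift_neq0; auto.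
  - apply qinf_prodC. exact HP3.
  - apply qinf_prodC. exact HP2.
  - exact HP3n.
Qed.
End MasterIdentity.

(** ** The seven specialisations *)

Lemma tri_double (n : nat) : (2 * tri n = n * (n - 1))%nat.
Proof. induction n. reflexivity. simpl tri. destruct n. reflexivity. nia. Qed.
Lemma exponent_pentagonal (n : nat) : (n * (3 * n - 1) / 2 = n + tri n + tri n + tri n)%nat.
Proof.
  assert (H := tri_double n).
  replace (n * (3 * n - 1))%nat with ((n + tri n + tri n + tri n) * 2)%nat by (destruct n; nia).
  apply Nat.div_mul. lia.
Qed.
Lemma exponent_2nn_n (n : nat) : (2 * n * n - n = n + tri n + tri n + tri n + tri n)%nat.
Proof. assert (H := tri_double n). destruct n; nia. Qed.
Lemma exponent_square (n : nat) : (n * n = n + tri n + tri n)%nat.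
Proof. assert (H := tri_double n). destruct n; nia. Qed.
Lemma exponent_square_sub (n : nat) : (n * n - n = tri n + tri n)%nat.
Proof. assert (H := tri_double n). destruct n; nia. Qed.

Lemma norm_sq_lt1 (q : Cplx) : (Cnorm q < 1)%R -> (Cnorm (q ^ 2) < 1)%R.
Proof. intros H. rewrite Cpow2, Cnorm_mult. assert (H0 := Cnorm_ge0 q). nra. Qed.
Lemma qpoch_small_neq0 (x p : Cplx) (n : nat) : (Cnorm x < 1)%R -> (Cnorm p < 1)%R -> qpoch x p n <> Czero.
Proof. intros. apply qpoch_neq0_small; lra. Qed.

(* The case g = 0 of the master identity, written with b = c and kp = cx
   (so x = kp/c when c <> 0):
   sum (1 - k p^(2n)) (k, x; p)_n / ((1 - k) (p, c; p)_n) c^n p^(n(n-1))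
     = (kp;p)_oo / (c;p)_oo. *)
Lemma master_sum_g0 (p k c x P1 P3 : Cplx) : (Cnorm p < 1)%R -> k <> Cone ->
  (forall n, qpoch c p n <> Czero) -> k * p = c * x -> qinf (k * p) p P1 -> qinf c p P3 ->
  Cseries (fun n => (Cone - k * p ^ (2 * n)) * qpoch k p n * qpoch x p n
                    / ((Cone - k) * qpoch p p n * qpoch c p n) * c ^ n * p ^ (tri n + tri n))
          (P1 / P3).
Proof.
  intros Hp hk Hc Hkx HP1 HP3.
  assert (HP3n : P3 <> Czero) by exact (qinf_neq0 p Hp c P3 Hc HP3).
  replace (P1 / P3) with (P1 * Cone / (P3 * Cone)) by (field; auto).
  eapply Cseries_ext; [| apply (master_sum p Hp k c Czero); auto].
  - intros n. assert (Hk := Cone_sub_neq k hk). assert (Hqq := qpoch_pp_neq0 p Hp n).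
    assert (Hcn := Hc n).
    unfold master_term, master_den.
    rewrite qpoch_times_zero, g_factor_zero, (wp_factor_eq p k n Hk), (b_factor_lin p k c c x n).
    + rewrite Cpow_add.
      transitivity (((- Cone) ^ n * (- Cone) ^ n) * ((Cone - k * p ^ (2 * n)) * qpoch k p n * qpoch x p n
        / ((Cone - k) * qpoch p p n * qpoch c p n) * c ^ n * (p ^ tri n * p ^ tri n))).
      * field. repeat split; auto; exact Cone_neq0.
      * rewrite Cneg1_sq. field. repeat split; auto.
    + intros i. rewrite Cpow_S. replace (k * (p * p ^ i)) with (k * p * p ^ i) by field.
      rewrite Hkx. field.
  - intros k'. rewrite qpoch_times_zero. exact Cone_neq0.
  - apply qinf_ext with Czero. field. apply qinf_zero.
  - apply qinf_ext with Czero. field. apply qinf_zero.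
Qed.

(* (1): the case b = g = 0. *)
Lemma identity1 (q k : Cplx) : (Cnorm q < 1)%R -> k <> Cone ->
  exists P : Cplx, qinf (k * q) q P /\
     Cseries (fun n => (Cone - k * q ^ (2 * n)) * qpoch k q n
                        / ((Cone - k) * qpoch q q n)
                        * (- Cone) ^ n * k ^ n * q ^ (n * (3 * n - 1) / 2)) P.
Proof.
  intros hq hk. destruct (qpoch_exists q hq (k * q)) as [P HP]. exists P. split; auto.
  eapply Cseries_ext; [| exact (master_sum_b0_g0 q hq k P HP)].
  intros n. assert (Hk := Cone_sub_neq k hk). assert (Hqq := qpoch_pp_neq0 q hq n).
  unfold master_term, master_den.
  rewrite qpoch_zero, qpoch_times_zero, b_factor_zero, g_factor_zero, (wp_factor_eq q k n Hk),
    exponent_pentagonal, !Cpow_add.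
  transitivity (((- Cone) ^ n * (- Cone) ^ n) * ((Cone - k * q ^ (2 * n)) * qpoch k q n
     / ((Cone - k) * qpoch q q n) * (- Cone) ^ n * k ^ n * (q ^ n * q ^ tri n * q ^ tri n * q ^ tri n))).
  - field. repeat split; auto; exact Cone_neq0.
  - rewrite Cneg1_sq. field. split; auto.
Qed.

(* (2): p = q^2, c = -kq, x = -q. *)
Lemma identity2 (q k : Cplx) : (Cnorm q < 1)%R -> k <> Cone ->
  ((forall n, qpoch (- (k * q)) (q ^ 2) n <> Czero) ->
   exists P1 P2 : Cplx, qinf (k * q ^ 2) (q ^ 2) P1 /\ qinf (- (k * q)) (q ^ 2) P2 /\
     Cseries (fun n => (Cone - k * q ^ (4 * n)) * qpoch (- q) (q ^ 2) n * qpoch k (q ^ 2) n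
                        / ((Cone - k) * qpoch (- (k * q)) (q ^ 2) n * qpoch (q ^ 2) (q ^ 2) n)
                        * (- Cone) ^ n * k ^ n * q ^ (2 * n * n - n)) (P1 / P2)).
Proof.
  intros hq hk hnz. assert (hp := norm_sq_lt1 q hq).
  destruct (qpoch_exists (q ^ 2) hp (k * q ^ 2)) as [P1 HP1].
  destruct (qpoch_exists (q ^ 2) hp (- (k * q))) as [P2 HP2].
  exists P1, P2. split; auto. split; auto.
  eapply Cseries_ext; [| apply (master_sum_g0 (q ^ 2) k (- (k * q)) (- q)); auto].
  - intros n. assert (Hk := Cone_sub_neq k hk). assert (Hqq := qpoch_pp_neq0 (q ^ 2) hp n).
    assert (Hb := hnz n).
    rewrite exponent_2nn_n, Cpow_opp, Cpow_mult_distr, !Cpow2_pow, Cpow_quadruple, Cpow_double, !Cpow_add.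
    field. repeat split; auto.
  - rewrite Cpow2. field.
Qed.

(* (3): p = q, c = -kq, x = -1. *)
Lemma identity3 (q k : Cplx) : (Cnorm q < 1)%R -> k <> Cone ->
  ((forall n, qpoch (- (k * q)) q n <> Czero) ->
   exists P1 P2 : Cplx, qinf (k * q) q P1 /\ qinf (- (k * q)) q P2 /\
     Cseries (fun n => (Cone - k * q ^ (2 * n)) * qpoch (- Cone) q n * qpoch k q n
                        / ((Cone - k) * qpoch (- (k * q)) q n * qpoch q q n)
                        * (- Cone) ^ n * k ^ n * q ^ (n * n)) (P1 / P2)).
Proof.
  intros hq hk hnz.
  destruct (qpoch_exists q hq (k * q)) as [P1 HP1].
  destruct (qpoch_exists q hq (- (k * q))) as [P2 HP2].
  exists P1, P2. split; auto. split; auto.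
  eapply Cseries_ext; [| apply (master_sum_g0 q k (- (k * q)) (- Cone)); auto].
  - intros n. assert (Hk := Cone_sub_neq k hk). assert (Hqq := qpoch_pp_neq0 q hq n).
    assert (Hb := hnz n).
    rewrite exponent_square, Cpow_opp, Cpow_mult_distr, Cpow_double, !Cpow_add.
    field. repeat split; auto.
  - field.
Qed.

(* Euler's identity (-q;q)_oo (q;q^2)_oo = 1, from the finite identity
   (-q;q)_(2n) (q;q^2)_n (q^2;q^2)_n = (q^2;q^2)_(2n). *)
Lemma euler_product (q PA PB : Cplx) : (Cnorm q < 1)%R -> qinf (- q) q PA -> qinf q (q ^ 2) PB -> PA * PB = Cone.
Proof.
  intros hq HA HB. assert (hp := norm_sq_lt1 q hq).
  destruct (qpoch_exists (q ^ 2) hp (q ^ 2)) as [PC HC].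
  assert (HCn : PC <> Czero) by exact (qinf_neq0 _ hp (q ^ 2) PC (qpoch_pp_neq0 _ hp) HC).
  assert (Hfin : forall n, qpoch (- q) q (2 * n) * qpoch q (q ^ 2) n * qpoch (q ^ 2) (q ^ 2) n
                           = qpoch (q ^ 2) (q ^ 2) (2 * n)).
  { intros n. rewrite !Cpow2. transitivity (qpoch q q (2 * n) * qpoch (- q) q (2 * n)).
    rewrite (qpoch_double q q n). field. apply qpoch_sq. }
  assert (L1 : Cconv (fun n => qpoch (- q) q (2 * n) * qpoch q (q ^ 2) n * qpoch (q ^ 2) (q ^ 2) n)
                     (PA * PB * PC)).
  { apply Cconv_mult. apply Cconv_mult. apply Cconv_subseq with (u := qpoch (- q) q) (phi := fun n => (2 * n)%nat).
    intros; lia. exact HA. exact HB. exact HC. }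
  assert (L2 : Cconv (fun n => qpoch (- q) q (2 * n) * qpoch q (q ^ 2) n * qpoch (q ^ 2) (q ^ 2) n) PC).
  { apply Cconv_ext with (fun n => qpoch (q ^ 2) (q ^ 2) (2 * n)). intros n. rewrite Hfin. reflexivity.
    apply Cconv_subseq with (u := qpoch (q ^ 2) (q ^ 2)) (phi := fun n => (2 * n)%nat). intros; lia. exact HC. }
  assert (E := Cconv_unique _ _ _ L1 L2).
  transitivity (PA * PB * PC / PC). field. auto. rewrite E. field. auto.
Qed.

(* (4): p = q, c = -q, x = -k, combined with Euler's identity. *)
Lemma identity4 (q k : Cplx) : (Cnorm q < 1)%R -> k <> Cone ->
  (exists P1 P2 : Cplx, qinf (k * q) q P1 /\ qinf q (q ^ 2) P2 /\
     Cseries (fun n => (Cone - k * q ^ (2 * n)) * qpoch (k ^ 2) (q ^ 2) n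
                        / ((Cone - k) * qpoch (q ^ 2) (q ^ 2) n)
                        * (- Cone) ^ n * q ^ (n * n)) (P1 * P2)).
Proof.
  intros hq hk. assert (hp := norm_sq_lt1 q hq).
  destruct (qpoch_exists q hq (k * q)) as [P1 HP1].
  destruct (qpoch_exists (q ^ 2) hp q) as [P2 HP2].
  destruct (qpoch_exists q hq (- q)) as [PA HPA].
  exists P1, P2. split; auto. split; auto.
  assert (hnzq : forall n, qpoch (- q) q n <> Czero).
  { intros n. apply qpoch_small_neq0; auto. rewrite Cnorm_opp. auto. }
  assert (HPAn : PA <> Czero) by exact (qinf_neq0 _ hq _ _ hnzq HPA).
  replace (P1 * P2) with (P1 / PA).
  2:{ transitivity (P1 * (PA * P2) / PA). rewrite (euler_product q PA P2 hq HPA HP2). field. auto.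
      field. auto. }
  eapply Cseries_ext; [| apply (master_sum_g0 q k (- q) (- k)); auto].
  - intros n. assert (Hk := Cone_sub_neq k hk). assert (Hqq := qpoch_pp_neq0 q hq n).
    assert (Hb := hnzq n).
    rewrite !Cpow2, <- (qpoch_sq k q n), <- (qpoch_sq q q n).
    rewrite exponent_square, Cpow_opp, Cpow_double, !Cpow_add.
    field. repeat split; auto.
  - field.
Qed.

(* (6): p = q^2, c = q, x = kq, using (x;q)_(2n) = (x, xq; q^2)_n. *)
Lemma identity6 (q k : Cplx) : (Cnorm q < 1)%R -> k <> Cone ->
  (exists P1 P2 : Cplx, qinf (k * q ^ 2) (q ^ 2) P1 /\ qinf q (q ^ 2) P2 /\
     Cseries (fun n => (Cone - k * q ^ (4 * n)) * qpoch k q (2 * n)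
                        / ((Cone - k) * qpoch q q (2 * n))
                        * q ^ (2 * n * n - n)) (P1 / P2)).
Proof.
  intros hq hk. assert (hp := norm_sq_lt1 q hq).
  destruct (qpoch_exists (q ^ 2) hp (k * q ^ 2)) as [P1 HP1].
  destruct (qpoch_exists (q ^ 2) hp q) as [P2 HP2].
  exists P1, P2. split; auto. split; auto.
  assert (hnzq : forall n, qpoch q (q ^ 2) n <> Czero) by (intros n; apply qpoch_small_neq0; auto).
  eapply Cseries_ext; [| apply (master_sum_g0 (q ^ 2) k q (k * q)); auto].
  - intros n. assert (Hk := Cone_sub_neq k hk). assert (Hqq := qpoch_pp_neq0 (q ^ 2) hp n).
    assert (Hb := hnzq n).
    rewrite (qpoch_double k q n), (qpoch_double q q n), <- !Cpow2.
    rewrite exponent_2nn_n, !Cpow2_pow, Cpow_quadruple, Cpow_double, !Cpow_add.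
    field. repeat split; auto.
  - rewrite Cpow2. field.
Qed.

(* The case p = q^2, g = -1/q, b = qd of the master identity, with kq = dx:
   sum (1 - k q^(4n)) (k, x, -q; q^2)_n / ((1 - k) (q^2, qd, -kq; q^2)_n) d^n q^(n^2 - n)
     = (kq^2, -d; q^2)_oo / (qd, -kq; q^2)_oo. *)
Lemma master_sum_g_inv (q k d x P1 P2 P3 P4 : Cplx) : (Cnorm q < 1)%R -> q <> Czero -> k <> Cone ->
  (forall n, qpoch (q * d) (q ^ 2) n <> Czero) -> (forall n, qpoch (- (k * q)) (q ^ 2) n <> Czero) ->
  k * q = d * x ->
  qinf (k * q ^ 2) (q ^ 2) P1 -> qinf (- d) (q ^ 2) P2 ->
  qinf (q * d) (q ^ 2) P3 -> qinf (- (k * q)) (q ^ 2) P4 ->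
  Cseries (fun n => (Cone - k * q ^ (4 * n)) * qpoch k (q ^ 2) n * qpoch x (q ^ 2) n * qpoch (- q) (q ^ 2) n
                    / ((Cone - k) * qpoch (q ^ 2) (q ^ 2) n * qpoch (q * d) (q ^ 2) n
                       * qpoch (- (k * q)) (q ^ 2) n) * d ^ n * q ^ (n * n - n))
          (P1 * P2 / (P3 * P4)).
Proof.
  intros hq hq0 hk Hc Hg Hkx HP1 HP2 HP3 HP4. assert (hp := norm_sq_lt1 q hq).
  assert (Eg : k * q ^ 2 * - Cinv q = - (k * q)) by (rewrite Cpow2; field; auto).
  eapply Cseries_ext; [| apply (master_sum (q ^ 2) hp k (q * d) (- Cinv q)); auto].
  - intros n. assert (Hk := Cone_sub_neq k hk). assert (Hqq := qpoch_pp_neq0 (q ^ 2) hp n).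
    assert (Hcn := Hc n). assert (Hgn := Hg n). assert (Hqn := Cpow_neq0 q n hq0).
    unfold master_term, master_den.
    rewrite (wp_factor_eq _ k n Hk), Eg, (b_factor_lin (q ^ 2) k (q * d) (q * d) x n),
      (g_factor_lin (q ^ 2) (- Cinv q) (- Cinv q) (- q) n).
    + rewrite exponent_square_sub, Cpow_opp, Cpow_inv, Cpow_mult_distr, !Cpow2_pow, Cpow_quadruple,
        Cpow_double by auto.
      transitivity (((- Cone) ^ n * (- Cone) ^ n) * ((Cone - k * (q ^ n * q ^ n * (q ^ n * q ^ n)))
        * qpoch k (q ^ 2) n * qpoch x (q ^ 2) n * qpoch (- q) (q ^ 2) n
        / ((Cone - k) * qpoch (q ^ 2) (q ^ 2) n * qpoch (q * d) (q ^ 2) n * qpoch (- (k * q)) (q ^ 2) n)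
        * d ^ n * q ^ (tri n + tri n))).
      * rewrite Cpow_add. field. repeat split; auto; exact Cone_neq0.
      * rewrite Cneg1_sq. field. repeat split; auto.
    + intros i. rewrite Cpow2. field. auto.
    + intros i. rewrite Cpow_S, Cpow2.
      replace (k * (q * q * (q * q) ^ i)) with (q * (k * q) * (q * q) ^ i) by field.
      rewrite Hkx. field.
  - intros n. rewrite Eg. auto.
  - apply qinf_ext with (- d); auto. field. auto.
  - rewrite Eg. auto.
Qed.

Lemma product_split (q A B Cq D : Cplx) : (Cnorm q < 1)%R -> qinf q (q ^ 2) A -> qinf (- (q ^ 2)) (q ^ 2) B ->
  qinf q q Cq -> qinf (q ^ 4) (q ^ 4) D -> exists PC, Cq = A * PC /\ D = PC * B.
Proof.
  intros hq HA HB HC HD. assert (hp := norm_sq_lt1 q hq).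
  destruct (qpoch_exists (q ^ 2) hp (q ^ 2)) as [PC HPC]. exists PC. split.
  - apply (Cconv_unique (fun n => qpoch q q (2 * n))).
    + apply Cconv_subseq with (u := qpoch q q) (phi := fun n => (2 * n)%nat). intros; lia. exact HC.
    + apply Cconv_ext with (fun n => qpoch q (q ^ 2) n * qpoch (q ^ 2) (q ^ 2) n).
      intros n. rewrite (qpoch_double q q n), Cpow2. reflexivity.
      apply Cconv_mult; auto.
  - apply (Cconv_unique (qpoch (q ^ 4) (q ^ 4))). exact HD.
    apply Cconv_ext with (fun n => qpoch (q ^ 2) (q ^ 2) n * qpoch (- (q ^ 2)) (q ^ 2) n).
    intros n. rewrite qpoch_sq, Cpow4. reflexivity.
    apply Cconv_mult; auto.
Qed.

(* At q = 0 identities (5) and (7) reduce to finite sums. *)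
Lemma qinf_at_zero (x p : Cplx) : x = Czero -> qinf x p Cone.
Proof. intros ->. apply qinf_zero. Qed.

Lemma identity5_at_zero (k : Cplx) : k <> Cone ->
   exists P1 P2 P3 P4 : Cplx,
     qinf (k * Czero ^ 2) (Czero ^ 2) P1 /\ qinf Czero Czero P2 /\
     qinf (- (k * Czero)) (Czero ^ 2) P3 /\ qinf (Czero ^ 4) (Czero ^ 4) P4 /\
     Cseries (fun n => (Cone - k * Czero ^ (4 * n)) * qpoch (- Czero) (Czero ^ 2) n * qpoch (k ^ 2) (Czero ^ 4) n
                        / ((Cone - k) * qpoch (- (k * Czero)) (Czero ^ 2) n * qpoch (Czero ^ 4) (Czero ^ 4) n)
                        * (- Cone) ^ n * Czero ^ (n * n)) ((P1 * P2) / (P3 * P4)).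
Proof.
  intros hk. assert (Hk := Cone_sub_neq k hk).
  exists Cone, Cone, Cone, Cone.
  split. apply qinf_at_zero. rewrite Cpow_zeroS. field.
  split. apply qinf_zero.
  split. apply qinf_at_zero. field.
  split. apply qinf_at_zero. rewrite Cpow_zeroS. reflexivity.
  match goal with |- Cseries ?f _ => replace (Cone * Cone / (Cone * Cone)) with (Csum f 1) end.
  - apply Cseries_finite. intros n Hn.
    replace (n * n)%nat with (S (n * n - 1)) by nia. rewrite (Cpow_zeroS (n * n - 1)). ring.
  - rewrite Csum_S, Csum_O, !qpoch_O. cbn [Nat.mul]. rewrite !Cpow_O. field. split; auto. exact Cone_neq0.
Qed.

Lemma identity7_at_zero (k : Cplx) : k <> Cone ->
   exists P1 P2 P3 P4 : Cplx,
     qinf (k * Czero ^ 2) (Czero ^ 2) P1 /\ qinf (- Cone) (Czero ^ 2) P2 /\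
     qinf (- (k * Czero)) (Czero ^ 2) P3 /\ qinf Czero (Czero ^ 2) P4 /\
     Cseries (fun n => (Cone - k * Czero ^ (4 * n)) * qpoch (- Czero) (Czero ^ 2) n * qpoch k Czero (2 * n)
                        / ((Cone - k) * qpoch (- (k * Czero)) (Czero ^ 2) n * qpoch Czero Czero (2 * n))
                        * Czero ^ (n * n - n)) ((P1 * P2) / (P3 * P4)).
Proof.
  intros hk. assert (Hk := Cone_sub_neq k hk).
  assert (Hm1 : forall m, qpoch (- Cone) (Czero ^ 2) (S m) = Cone + Cone).
  { induction m.
    - rewrite qpoch_S, qpoch_O, Cpow_O. field.
    - rewrite qpoch_S, IHm, (Cpow_S (Czero ^ 2) m), Cpow_zeroS. field. }
  exists Cone, (Cone + Cone), Cone, Cone.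
  split. apply qinf_at_zero. rewrite Cpow_zeroS. field.
  split. apply Cconv_eventually_const with 1%nat. intros [|n] Hn. lia. apply Hm1.
  split. apply qinf_at_zero. field.
  split. apply qinf_zero.
  match goal with |- Cseries ?f _ => replace (Cone * (Cone + Cone) / (Cone * Cone)) with (Csum f 2) end.
  - apply Cseries_finite. intros n Hn.
    replace (n * n - n)%nat with (S (n * n - n - 1)) by nia. rewrite (Cpow_zeroS (n * n - n - 1)). ring.
  - rewrite !Csum_S, Csum_O. cbn [Nat.mul Nat.add Nat.sub].
    rewrite ?qpoch_S, ?qpoch_O, ?Cpow_zeroS, ?Cpow_O. field. split; auto. exact Cone_neq0.
Qed.

(* (5): d = -q, x = -k, combined with [product_split]. *)
Lemma identity5 (q k : Cplx) : (Cnorm q < 1)%R -> k <> Cone ->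
  ((forall n, qpoch (- (k * q)) (q ^ 2) n <> Czero) ->
   exists P1 P2 P3 P4 : Cplx,
     qinf (k * q ^ 2) (q ^ 2) P1 /\ qinf q q P2 /\
     qinf (- (k * q)) (q ^ 2) P3 /\ qinf (q ^ 4) (q ^ 4) P4 /\
     Cseries (fun n => (Cone - k * q ^ (4 * n)) * qpoch (- q) (q ^ 2) n * qpoch (k ^ 2) (q ^ 4) n
                        / ((Cone - k) * qpoch (- (k * q)) (q ^ 2) n * qpoch (q ^ 4) (q ^ 4) n)
                        * (- Cone) ^ n * q ^ (n * n)) ((P1 * P2) / (P3 * P4))).
Proof.
  intros hq hk hnz. destruct (classic (q = Czero)) as [->|hq0]. apply identity5_at_zero; auto.
  assert (hp := norm_sq_lt1 q hq).
  assert (hp4 : (Cnorm (q ^ 4) < 1)%R).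
  { rewrite Cpow4, Cnorm_mult. assert (H0 := Cnorm_ge0 (q ^ 2)). nra. }
  destruct (qpoch_exists (q ^ 2) hp (k * q ^ 2)) as [P1 HP1].
  destruct (qpoch_exists q hq q) as [P2 HP2].
  destruct (qpoch_exists (q ^ 2) hp (- (k * q))) as [P3 HP3].
  destruct (qpoch_exists (q ^ 4) hp4 (q ^ 4)) as [P4 HP4].
  destruct (qpoch_exists (q ^ 2) hp q) as [A HA].
  destruct (qpoch_exists (q ^ 2) hp (- (q ^ 2))) as [B HB].
  exists P1, P2, P3, P4. split; auto. split; auto. split; auto. split; auto.
  destruct (product_split q A B P2 P4 hq HA HB HP2 HP4) as [PC [E2 E4]].
  assert (hnzB : forall n, qpoch (q * - q) (q ^ 2) n <> Czero).
  { intros n. apply qpoch_small_neq0; auto. replace (q * - q) with (- (q ^ 2)) by (rewrite Cpow2; field).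
    rewrite Cnorm_opp. auto. }
  assert (HBn : B <> Czero).
  { apply (qinf_neq0 _ hp (- (q ^ 2))); auto.
    intros n. replace (- (q ^ 2)) with (q * - q) by (rewrite Cpow2; field). auto. }
  assert (HP3n : P3 <> Czero) by exact (qinf_neq0 _ hp _ _ hnz HP3).
  assert (HPCn : PC <> Czero).
  { intros E. apply (qinf_neq0 _ hp4 (q ^ 4) P4 (qpoch_pp_neq0 _ hp4) HP4). rewrite E4, E. field. }
  replace (P1 * P2 / (P3 * P4)) with (P1 * A / (B * P3)) by (rewrite E2, E4; field; repeat split; auto).
  eapply Cseries_ext; [| apply (master_sum_g_inv q k (- q) (- k)); auto].
  - intros n. assert (Hk := Cone_sub_neq k hk). assert (Hqq := qpoch_pp_neq0 (q ^ 2) hp n).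
    assert (Hb := hnz n). assert (Hbb := hnzB n).
    rewrite (Cpow2 k), (Cpow4 q), <- (qpoch_sq k (q ^ 2) n), <- (qpoch_sq (q ^ 2) (q ^ 2) n).
    replace (- (q ^ 2)) with (q * - q) by (rewrite Cpow2; field).
    rewrite exponent_square_sub, exponent_square, Cpow_opp, !Cpow_add.
    field. repeat split; auto.
  - field.
  - apply qinf_ext with q. field. auto.
  - apply qinf_ext with (- (q ^ 2)). rewrite Cpow2. field. auto.
Qed.

(* (7): d = 1, x = kq, using (x;q)_(2n) = (x, xq; q^2)_n. *)
Lemma identity7 (q k : Cplx) : (Cnorm q < 1)%R -> k <> Cone ->
  ((forall n, qpoch (- (k * q)) (q ^ 2) n <> Czero) ->
   exists P1 P2 P3 P4 : Cplx,
     qinf (k * q ^ 2) (q ^ 2) P1 /\ qinf (- Cone) (q ^ 2) P2 /\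
     qinf (- (k * q)) (q ^ 2) P3 /\ qinf q (q ^ 2) P4 /\
     Cseries (fun n => (Cone - k * q ^ (4 * n)) * qpoch (- q) (q ^ 2) n * qpoch k q (2 * n)
                        / ((Cone - k) * qpoch (- (k * q)) (q ^ 2) n * qpoch q q (2 * n))
                        * q ^ (n * n - n)) ((P1 * P2) / (P3 * P4))).
Proof.
  intros hq hk hnz. destruct (classic (q = Czero)) as [->|hq0]. apply identity7_at_zero; auto.
  assert (hp := norm_sq_lt1 q hq).
  destruct (qpoch_exists (q ^ 2) hp (k * q ^ 2)) as [P1 HP1].
  destruct (qpoch_exists (q ^ 2) hp (- Cone)) as [P2 HP2].
  destruct (qpoch_exists (q ^ 2) hp (- (k * q))) as [P3 HP3].
  destruct (qpoch_exists (q ^ 2) hp q) as [P4 HP4].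
  exists P1, P2, P3, P4. split; auto. split; auto. split; auto. split; auto.
  assert (hnzB : forall n, qpoch (q * Cone) (q ^ 2) n <> Czero).
  { intros n. apply qpoch_small_neq0; auto. replace (q * Cone) with q by field. auto. }
  replace (P1 * P2 / (P3 * P4)) with (P1 * P2 / (P4 * P3)) by (f_equal; ring).
  eapply Cseries_ext; [| apply (master_sum_g_inv q k Cone (k * q)); auto].
  - intros n. assert (Hk := Cone_sub_neq k hk). assert (Hqq := qpoch_pp_neq0 (q ^ 2) hp n).
    assert (Hb := hnz n). assert (Hbb := hnzB n).
    replace (q * Cone) with q in * by field.
    rewrite (qpoch_double k q n), (qpoch_double q q n), <- !Cpow2, Cpow_one.
    field. repeat split; auto.
  - field.
  - apply qinf_ext with q. field. auto.
Qed.

Theorem mainTheorem16 (q k : Cplx) (hq : Cnorm q < 1) (hk : k <> Cone) :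
  (* (1) *)
  (exists P : Cplx, qinf (k * q) q P /\
     Cseries (fun n => (Cone - k * q ^ (2 * n)) * qpoch k q n
                        / ((Cone - k) * qpoch q q n)
                        * (- Cone) ^ n * k ^ n * q ^ (n * (3 * n - 1) / 2)) P)
  /\
  (* (2) *)
  ((forall n, qpoch (- (k * q)) (q ^ 2) n <> Czero) ->
   exists P1 P2 : Cplx, qinf (k * q ^ 2) (q ^ 2) P1 /\ qinf (- (k * q)) (q ^ 2) P2 /\
     Cseries (fun n => (Cone - k * q ^ (4 * n)) * qpoch (- q) (q ^ 2) n * qpoch k (q ^ 2) n
                        / ((Cone - k) * qpoch (- (k * q)) (q ^ 2) n * qpoch (q ^ 2) (q ^ 2) n)
                        * (- Cone) ^ n * k ^ n * q ^ (2 * n * n - n)) (P1 / P2))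
  /\
  (* (3) *)
  ((forall n, qpoch (- (k * q)) q n <> Czero) ->
   exists P1 P2 : Cplx, qinf (k * q) q P1 /\ qinf (- (k * q)) q P2 /\
     Cseries (fun n => (Cone - k * q ^ (2 * n)) * qpoch (- Cone) q n * qpoch k q n
                        / ((Cone - k) * qpoch (- (k * q)) q n * qpoch q q n)
                        * (- Cone) ^ n * k ^ n * q ^ (n * n)) (P1 / P2))
  /\
  (* (4) *)
  (exists P1 P2 : Cplx, qinf (k * q) q P1 /\ qinf q (q ^ 2) P2 /\
     Cseries (fun n => (Cone - k * q ^ (2 * n)) * qpoch (k ^ 2) (q ^ 2) n
                        / ((Cone - k) * qpoch (q ^ 2) (q ^ 2) n)
                        * (- Cone) ^ n * q ^ (n * n)) (P1 * P2))
  /\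
  (* (5) *)
  ((forall n, qpoch (- (k * q)) (q ^ 2) n <> Czero) ->
   exists P1 P2 P3 P4 : Cplx,
     qinf (k * q ^ 2) (q ^ 2) P1 /\ qinf q q P2 /\
     qinf (- (k * q)) (q ^ 2) P3 /\ qinf (q ^ 4) (q ^ 4) P4 /\
     Cseries (fun n => (Cone - k * q ^ (4 * n)) * qpoch (- q) (q ^ 2) n * qpoch (k ^ 2) (q ^ 4) n
                        / ((Cone - k) * qpoch (- (k * q)) (q ^ 2) n * qpoch (q ^ 4) (q ^ 4) n)
                        * (- Cone) ^ n * q ^ (n * n)) ((P1 * P2) / (P3 * P4)))
  /\
  (* (6) *)
  (exists P1 P2 : Cplx, qinf (k * q ^ 2) (q ^ 2) P1 /\ qinf q (q ^ 2) P2 /\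
     Cseries (fun n => (Cone - k * q ^ (4 * n)) * qpoch k q (2 * n)
                        / ((Cone - k) * qpoch q q (2 * n))
                        * q ^ (2 * n * n - n)) (P1 / P2))
  /\
  (* (7) *)
  ((forall n, qpoch (- (k * q)) (q ^ 2) n <> Czero) ->
   exists P1 P2 P3 P4 : Cplx,
     qinf (k * q ^ 2) (q ^ 2) P1 /\ qinf (- Cone) (q ^ 2) P2 /\
     qinf (- (k * q)) (q ^ 2) P3 /\ qinf q (q ^ 2) P4 /\
     Cseries (fun n => (Cone - k * q ^ (4 * n)) * qpoch (- q) (q ^ 2) n * qpoch k q (2 * n)
                        / ((Cone - k) * qpoch (- (k * q)) (q ^ 2) n * qpoch q q (2 * n))
                        * q ^ (n * n - n)) ((P1 * P2) / (P3 * P4))).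
Proof.
  split. apply identity1; auto.
  split. apply identity2; auto.
  split. apply identity3; auto.
  split. apply identity4; auto.
  split. apply identity5; auto.
  split. apply identity6; auto.
  apply identity7; auto.
Qed.
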